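(* Let $\mathcal{C}$ be a collection of complete, metrically $D$-doubling metric spaces with the following property: for every sequence $(r_k)$ of positive reals and every sequence $(X_k,p_k)$ with $X_k\in\mathcal{C}$ and $p_k\in X_k$ such that $(r_k^{-1}X_k,p_k)$ converges in the pointed Gromov–Hausdorff sense, the limit is connected and has no cut points. Then there is a constant $\lambda\ge1$ such that every element of $\mathcal{C}$ is $\lambda$-annularly linearly connected.
   Context: Metrically $D$-doubling: every ball is covered by at most $D$ balls of half the radius. $r^{-1}X$ denotes $X$ with metric $r^{-1}d$. A cut point of a connected space $Y$ is $y$ with $Y\setminus\{y\}$ disconnected. $\lambda$-annularly linearly connected: for all $p$ and $r\in(0,\mathrm{diam}\,X]$, any two points of $A(p,r,2r)=\{z:r\le d(z,p)\le2r\}$ can be joined by a continuum (compact connected set) in $A(p,r/\lambda,2\lambda r)$. *)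

From Stdlib Require Import Reals Lra List.
Open Scope R_scope.

Record MetricSpace : Type := {
  carrier :> Type;
  dist : carrier -> carrier -> R;
  dist_nonneg : forall x y, 0 <= dist x y;
  dist_eq0 : forall x y, dist x y = 0 <-> x = y;
  dist_sym : forall x y, dist x y = dist y x;
  dist_tri : forall x y z, dist x z <= dist x y + dist y z
}.

Arguments dist {m} _ _.

(** * Rescaling: r^{-1} X = X with metric r^{-1} d.
    Only meaningful for r > 0; for r <= 0 we use the factor 1 (never used). *)
Definition pos_part1 (r : R) : R := if Rlt_dec 0 r then r else 1.

Lemma pos_part1_pos r : 0 < pos_part1 r.
Proof. unfold pos_part1; destruct (Rlt_dec 0 r); lra. Qed.

Lemma pos_part1_eq r : 0 < r -> pos_part1 r = r.
Proof. unfold pos_part1; destruct (Rlt_dec 0 r); lra. Qed.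

Definition sdist (X : MetricSpace) (r : R) (x y : X) : R := dist x y / pos_part1 r.

Lemma sdist_nonneg X r x y : 0 <= sdist X r x y.
Proof.
  unfold sdist, Rdiv. apply Rmult_le_pos; [apply dist_nonneg|].
  left; apply Rinv_0_lt_compat, pos_part1_pos.
Qed.

Lemma sdist_eq0 X r x y : sdist X r x y = 0 <-> x = y.
Proof.
  unfold sdist. pose proof (pos_part1_pos r). rewrite <- dist_eq0.
  split; intro H0.
  - unfold Rdiv in H0. apply Rmult_integral in H0. destruct H0 as [H0|H0]; auto.
    exfalso. apply (Rinv_neq_0_compat (pos_part1 r)); lra.
  - rewrite H0. unfold Rdiv. ring.
Qed.

Lemma sdist_sym X r x y : sdist X r x y = sdist X r y x.
Proof. unfold sdist. rewrite dist_sym. reflexivity. Qed.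

Lemma sdist_tri X r x y z : sdist X r x z <= sdist X r x y + sdist X r y z.
Proof.
  unfold sdist, Rdiv. rewrite <- Rmult_plus_distr_r.
  apply Rmult_le_compat_r; [left; apply Rinv_0_lt_compat, pos_part1_pos|].
  apply dist_tri.
Qed.

Definition rescale (r : R) (X : MetricSpace) : MetricSpace :=
  {| carrier := carrier X;
     dist := sdist X r;
     dist_nonneg := sdist_nonneg X r;
     dist_eq0 := sdist_eq0 X r;
     dist_sym := sdist_sym X r;
     dist_tri := sdist_tri X r |}.

Section Basic.
Variable X : MetricSpace.

Definition ball (x : X) (r : R) : X -> Prop := fun y => dist x y < r.
Definition cball (x : X) (r : R) : X -> Prop := fun y => dist x y <= r.

Definition cauchy (u : nat -> X) : Prop :=
  forall eps, 0 < eps -> exists N, forall m n, (N <= m)%nat -> (N <= n)%nat ->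
    dist (u m) (u n) < eps.

Definition converges_to (u : nat -> X) (x : X) : Prop :=
  forall eps, 0 < eps -> exists N, forall n, (N <= n)%nat -> dist (u n) x < eps.

Definition complete : Prop :=
  forall u : nat -> X, cauchy u -> exists x, converges_to u x.

Definition doubling (D : nat) : Prop :=
  forall (x : X) (r : R), 0 < r ->
    exists cs : list X, (length cs <= D)%nat /\
      forall y, ball x r y -> exists c, In c cs /\ ball c (r / 2) y.

Definition is_open (U : X -> Prop) : Prop :=
  forall x, U x -> exists e, 0 < e /\ forall y, ball x e y -> U y.

Definition connected_set (S : X -> Prop) : Prop :=
  ~ exists U V : X -> Prop, is_open U /\ is_open V /\
      (forall x, S x -> U x \/ V x) /\
      (forall x, S x -> U x -> V x -> False) /\
      (exists x, S x /\ U x) /\ (exists x, S x /\ V x).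

Definition connected_space : Prop := connected_set (fun _ => True).

Definition cut_point (y : X) : Prop := ~ connected_set (fun z => z <> y).

Definition no_cut_points : Prop := forall y : X, ~ cut_point y.

Definition compact_set (K : X -> Prop) : Prop :=
  forall F : (X -> Prop) -> Prop,
    (forall U, F U -> is_open U) ->
    (forall x, K x -> exists U, F U /\ U x) ->
    exists l : list (X -> Prop), (forall U, In U l -> F U) /\
      (forall x, K x -> exists U, In U l /\ U x).

Definition continuum (K : X -> Prop) : Prop := compact_set K /\ connected_set K.

(** r <= diam X  (diam X in [0, +infinity]) *)
Definition le_diam (r : R) : Prop :=
  forall s, s < r -> exists x y : X, s < dist x y.

Definition annulus (p : X) (a b : R) : X -> Prop :=
  fun z => a <= dist z p /\ dist z p <= b.

Definition ALC (lam : R) : Prop :=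
  forall (p : X) (r : R), 0 < r -> le_diam r ->
    forall x y, annulus p r (2 * r) x -> annulus p r (2 * r) y ->
      exists K : X -> Prop, continuum K /\ K x /\ K y /\
        (forall z, K z -> annulus p (r / lam) (2 * lam * r) z).

End Basic.

Arguments ball {X} _ _ _.
Arguments cball {X} _ _ _.

Definition pGH_converges (Xs : nat -> MetricSpace) (ps : forall k, Xs k)
    (Y : MetricSpace) (q : Y) : Prop :=
  forall R0 eps, 0 < R0 -> 0 < eps ->
    exists N, forall k, (N <= k)%nat ->
      exists f : Xs k -> Y,
        f (ps k) = q /\
        (forall a b, cball (ps k) R0 a -> cball (ps k) R0 b ->
           Rabs (dist (f a) (f b) - dist a b) < eps) /\
        (forall y, cball q (R0 - eps) y ->
           exists a, cball (ps k) R0 a /\ dist (f a) y < eps).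

(* Constants are made uniform by compactness: a sequence of counterexamples
   with worsening constants, rescaled to unit size, has (by the doubling
   property and a diagonal argument) a pointed Gromov-Hausdorff convergent
   subsequence, whose limit is connected and has no cut points.  In the limit,
   connectedness gives chains of short links in a bounded ball, and removing
   the base point gives chains from x to y avoiding it whose links are short
   relative to the distance to the base point.  Lifted back to the rescaled
   spaces, such chains contradict the choice of counterexamples.  Refining the
   annular chains by the local ones gives e-chains from x to y in a fixed
   compact annulus for every e > 0, and the points reachable from x by
   arbitrarily fine chains in that annulus form the required continuum. *)

From Stdlib Require Import Reals Lra Lia List Classical ClassicalEpsilon
  FunctionalExtensionality ProofIrrelevance Cantor.
Open Scope R_scope.

Lemma Rabs_le_bounds (a b : R) : Rabs a <= b -> -b <= a <= b.
Proof. intros H. pose proof (Rle_abs a). pose proof (Rle_abs (-a)). rewrite Rabs_Ropp in *. lra. Qed.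

Lemma pow2_pos (n : nat) : 0 < 2 ^ n.
Proof. apply pow_lt; lra. Qed.

Lemma INR_succ_le_pow2 (n : nat) : INR n + 1 <= 2 ^ n.
Proof. induction n; [simpl; lra|]. rewrite S_INR. simpl. pose proof (pos_INR n). lra. Qed.

Lemma div_pow2_small (c eps : R) : 0 < eps -> exists n, c / 2 ^ n < eps.
Proof.
  intros He. destruct (INR_unbounded (Rabs c / eps)) as [n Hn]. exists n.
  pose proof (INR_succ_le_pow2 n). pose proof (pow2_pos n). pose proof (Rle_abs c).
  apply Rmult_lt_reg_r with (2 ^ n); [lra|].
  unfold Rdiv in *. rewrite Rmult_assoc, Rinv_l, Rmult_1_r by lra.
  apply Rmult_lt_compat_r with (r := eps) in Hn; [|lra].
  rewrite Rmult_assoc, Rinv_l in Hn by lra. nra.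
Qed.

Lemma inv_succ_small (eps : R) : 0 < eps -> exists n : nat, / (INR n + 1) < eps.
Proof.
  intros He. destruct (INR_unbounded (/ eps)) as [n Hn]. exists n. pose proof (pos_INR n).
  rewrite <- (Rinv_inv eps). apply Rinv_lt_contravar; [|lra].
  apply Rmult_lt_0_compat; [apply Rinv_0_lt_compat|]; lra.
Qed.

Lemma dependent_choice {A : Type} (Inv : nat -> A -> Prop) (Rl : nat -> A -> A -> Prop) :
  (exists a0, Inv 0%nat a0) -> (forall n a, Inv n a -> exists b, Inv (S n) b /\ Rl n a b) ->
  exists f : nat -> A, (forall n, Inv n (f n)) /\ forall n, Rl n (f n) (f (S n)).
Proof.
  intros [a0 H0] Hs.
  pose (g := fix g (n : nat) : {a | Inv n a} := match n with O => exist _ a0 H0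
    | S m => let s := g m in
      let t := constructive_indefinite_description _ (Hs m (proj1_sig s) (proj2_sig s)) in
      exist _ (proj1_sig t) (proj1 (proj2_sig t)) end).
  exists (fun n => proj1_sig (g n)). split.
  - intros n; exact (proj2_sig (g n)).
  - intros n. simpl.
    destruct (constructive_indefinite_description _ _) as [b [Hb1 Hb2]]. simpl. exact Hb2.
Qed.

Lemma dist_self (X : MetricSpace) (x : X) : dist x x = 0.
Proof. apply dist_eq0; reflexivity. Qed.

Lemma dist_pos (X : MetricSpace) (x y : X) : x <> y -> 0 < dist x y.
Proof.
  intros Hxy. destruct (dist_nonneg X x y) as [H|H]; auto.
  exfalso. apply Hxy, dist_eq0. auto.
Qed.

Lemma dist_diff (X : MetricSpace) (u v z w : X) :
  Rabs (dist u v - dist z w) <= dist u z + dist v w.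
Proof.
  pose proof (dist_tri X u z v). pose proof (dist_tri X z w v).
  pose proof (dist_tri X z u w). pose proof (dist_tri X u v w).
  pose proof (dist_sym X z u). pose proof (dist_sym X w v). apply Rabs_le. lra.
Qed.

Lemma rescale_dist (X : MetricSpace) r (x y : X) : 0 < r -> @dist (rescale r X) x y = dist x y / r.
Proof. intros Hr. simpl. unfold sdist. rewrite pos_part1_eq; auto. Qed.

Lemma doubling_rescale (X : MetricSpace) D r : 0 < r -> doubling X D -> doubling (rescale r X) D.
Proof.
  intros Hr Hdb x rho Hrho. destruct (Hdb x (rho * r)) as [cs [Hl Hc]]; [nra|].
  exists cs. split; auto. intros y Hy. unfold ball in *. rewrite rescale_dist in Hy by auto.
  destruct (Hc y) as [c [Hc1 Hc2]].
  { apply Rmult_lt_reg_r with (/ r); [apply Rinv_0_lt_compat; auto|].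
    unfold Rdiv in Hy. rewrite Rmult_assoc, Rinv_r by lra. lra. }
  exists c. split; auto. rewrite rescale_dist by auto.
  apply Rmult_lt_reg_r with r; auto. unfold Rdiv. rewrite Rmult_assoc, Rinv_l by lra.
  unfold Rdiv in Hc2. lra.
Qed.

Lemma rescale_lt (X : MetricSpace) r (u v : X) t : 0 < r ->
  @dist (rescale r X) u v < t -> dist u v < t * r.
Proof.
  intros Hr H. rewrite rescale_dist in H by auto. apply Rmult_lt_compat_r with (r := r) in H; auto.
  unfold Rdiv in H. rewrite Rmult_assoc, Rinv_l, Rmult_1_r in H by lra. exact H.
Qed.

Lemma rescale_le (X : MetricSpace) r (u v : X) t : 0 < r ->
  dist u v <= t * r -> @dist (rescale r X) u v <= t.
Proof.
  intros Hr H. rewrite rescale_dist by auto. apply Rmult_le_reg_r with r; auto.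
  unfold Rdiv. rewrite Rmult_assoc, Rinv_l, Rmult_1_r by lra. exact H.
Qed.

Lemma rescale_relative_link (X : MetricSpace) r (p w w' : X) c : 0 < r ->
  @dist (rescale r X) w w' < @dist (rescale r X) p w / c -> dist w w' < dist p w / c.
Proof.
  intros Hr H. rewrite !rescale_dist in H by auto. unfold Rdiv in *.
  apply Rmult_lt_compat_r with (r := r) in H; auto.
  replace (dist w w' * / r * r) with (dist w w' * (/ r * r)) in H by ring.
  replace (dist p w * / r * / c * r) with (dist p w * / c * (/ r * r)) in H by ring.
  rewrite Rinv_l, !Rmult_1_r in H by lra. exact H.
Qed.

Lemma rescaled_annulus_bounds (X : MetricSpace) r (p x : X) : 0 < r ->
  annulus X p r (2 * r) x -> 1 <= @dist (rescale r X) p x <= 2.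
Proof.
  intros Hr [Hx1 Hx2]. rewrite rescale_dist, dist_sym by auto.
  split; apply Rmult_le_reg_r with r; auto; unfold Rdiv; rewrite Rmult_assoc, Rinv_l by lra; lra.
Qed.

Lemma annulus_of_rescaled_bounds (X : MetricSpace) r (p w : X) lo hi L : 0 < r -> 0 < lo ->
  lo / 2 <= @dist (rescale r X) p w <= 2 * hi -> 2 / lo + 2 * hi <= L -> annulus X p (r / L) (L * r) w.
Proof.
  intros Hr Hlo Hw HL. rewrite rescale_dist in Hw by auto.
  set (t := dist p w / r) in Hw.
  assert (Ht : dist w p = t * r) by (unfold t; rewrite dist_sym; field; lra).
  assert (H2lo : 0 < 2 / lo) by (apply Rdiv_lt_0_compat; lra).
  assert (Hinv : / L <= lo / 2).
  { replace (lo / 2) with (/ (2 / lo)) by (field; lra). apply Rinv_le_contravar; lra. }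
  unfold annulus. rewrite Ht. split; unfold Rdiv in *; nra.
Qed.

Definition is_closed (X : MetricSpace) (F : X -> Prop) := is_open X (fun z => ~ F z).

Lemma ball_open (X : MetricSpace) (c : X) r : is_open X (ball c r).
Proof.
  intros x Hx. unfold ball in *. exists (r - dist c x). split; [lra|].
  intros y Hy. unfold ball in Hy. pose proof (dist_tri X c x y). lra.
Qed.

Lemma annulus_closed (X : MetricSpace) (p : X) a b : is_closed X (annulus X p a b).
Proof.
  intros z Hz. unfold annulus in Hz.
  destruct (Rlt_or_le (dist z p) a) as [H|H].
  - exists (a - dist z p). split; [lra|]. intros w Hw [Hw1 Hw2]. unfold ball in Hw.
    pose proof (dist_tri X w z p). rewrite (dist_sym X w z) in H0. lra.
  - assert (b < dist z p) by (apply Rnot_le_lt; intro; apply Hz; split; auto).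
    exists (dist z p - b). split; [lra|]. intros w Hw [Hw1 Hw2]. unfold ball in Hw.
    pose proof (dist_tri X z w p). lra.
Qed.

(** * Chains *)

Inductive chain {T : Type} (L : T -> T -> Prop) (P : T -> Prop) : T -> T -> Prop :=
| chain_nil : forall x, P x -> chain L P x x
| chain_cons : forall x z y, P x -> L x z -> chain L P z y -> chain L P x y.

Lemma chain_head {T : Type} {L : T -> T -> Prop} {P : T -> Prop} {x y : T} :
  chain L P x y -> P x.
Proof. destruct 1; auto. Qed.

Lemma chain_last {T : Type} {L : T -> T -> Prop} {P : T -> Prop} {x y : T} :
  chain L P x y -> P y.
Proof. induction 1; auto. Qed.

Lemma chain_cat {T : Type} {L : T -> T -> Prop} {P : T -> Prop} {x y w : T} :
  chain L P x y -> chain L P y w -> chain L P x w.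
Proof. induction 1; intros; auto. eapply chain_cons; eauto. Qed.

Lemma chain_snoc {T : Type} {L : T -> T -> Prop} {P : T -> Prop} {x y w : T} :
  chain L P x y -> L y w -> P w -> chain L P x w.
Proof.
  intros H Hl Hp. apply (chain_cat H).
  apply chain_cons with w; [exact (chain_last H)|auto|constructor; auto].
Qed.

Lemma chain_refine {T : Type} {L : T -> T -> Prop} {P : T -> Prop}
  (L' : T -> T -> Prop) (P' : T -> Prop) x y :
  (forall u v, P u -> P v -> L u v -> chain L' P' u v) -> (forall u, P u -> P' u) ->
  chain L P x y -> chain L' P' x y.
Proof.
  intros HL HP. induction 1 as [x Hx|x z y Hx Hl Hc IH]; [constructor; auto|].
  refine (chain_cat _ IH). apply HL; auto. exact (chain_head Hc).
Qed.

Lemma chain_mono {T : Type} {L : T -> T -> Prop} {P : T -> Prop}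
  (L' : T -> T -> Prop) (P' : T -> Prop) x y :
  (forall u v, P u -> P v -> L u v -> L' u v) -> (forall u, P u -> P' u) ->
  chain L P x y -> chain L' P' x y.
Proof.
  intros HL HP. apply chain_refine; auto. intros u v Hu Hv Huv.
  apply chain_cons with v; auto. constructor; auto.
Qed.

Lemma chain_invariant {T : Type} {L : T -> T -> Prop} {P : T -> Prop}
  (Inv : T -> Prop) x y :
  (forall u v, P u -> P v -> L u v -> Inv u -> Inv v) -> chain L P x y -> Inv x -> Inv y.
Proof.
  intros Hstep. induction 1 as [x Hx|x z y Hx Hl Hc IH]; auto.
  intros Hix. apply IH. exact (Hstep x z Hx (chain_head Hc) Hl Hix).
Qed.

(** [lo] is attained, so it inherits positivity of [g] on [P]. *)
Lemma chain_range {T : Type} {L : T -> T -> Prop} {P : T -> Prop} (g : T -> R) x y :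
  chain L P x y ->
  exists lo hi, (exists z, P z /\ g z = lo) /\ chain L (fun z => P z /\ lo <= g z <= hi) x y.
Proof.
  induction 1 as [x Hx|x z y Hx Hl Hc [lo [hi [[z0 [Hz0 Hg]] IH]]]].
  - exists (g x), (g x). split; [eauto|]. constructor. split; auto; lra.
  - exists (Rmin lo (g x)), (Rmax hi (g x)). split.
    + destruct (Rle_dec lo (g x)); [exists z0|exists x]; split; auto;
        [rewrite Rmin_left|rewrite Rmin_right]; lra.
    + apply chain_cons with z; [split; auto; split; [apply Rmin_r|apply Rmax_r]|auto|].
      revert IH. apply chain_mono; auto. intros u [Hu1 Hu2]. split; auto.
      pose proof (Rmin_l lo (g x)). pose proof (Rmax_l hi (g x)). lra.
Qed.

Definition link {X : MetricSpace} (e : R) (u v : X) : Prop := dist u v < e.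

Lemma chain_link_mono (X : MetricSpace) (K : X -> Prop) e e' x y : e <= e' ->
  chain (link e) K x y -> chain (link e') K x y.
Proof. intros H. apply chain_mono; auto. unfold link; intros; lra. Qed.

Lemma connected_chain (X : MetricSpace) (S : X -> Prop) (L : X -> X -> Prop) :
  connected_set X S ->
  (forall w, S w -> exists e, 0 < e /\ forall v, dist w v < e -> S v -> L w v) ->
  (forall v, S v -> exists e, 0 < e /\ forall u, dist v u < e -> S u -> L u v) ->
  forall x y, S x -> S y -> chain L S x y.
Proof.
  intros Hc H1 H2 x y Hx Hy.
  apply NNPP; intro Hn. apply Hc.
  exists (fun w => exists u e, 0 < e /\ chain L S x u /\ dist u w < e /\
             (forall v, dist u v < e -> S v -> L u v)).
  exists (fun w => exists v e, 0 < e /\ S v /\ ~ chain L S x v /\ dist v w < e /\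
             (forall u, dist v u < e -> S u -> L u v)).
  repeat split.
  - intros w [u [e [He [Hch [Hd Hl]]]]]. exists (e - dist u w). split; [lra|].
    intros v Hv. unfold ball in Hv. exists u, e. repeat split; auto.
    pose proof (dist_tri X u w v). lra.
  - intros w [v [e [He [Hs [Hch [Hd Hl]]]]]]. exists (e - dist v w). split; [lra|].
    intros u Hu. unfold ball in Hu. exists v, e. repeat split; auto.
    pose proof (dist_tri X v w u). lra.
  - intros w Hw. destruct (classic (chain L S x w)) as [Hch|Hch].
    + left. destruct (H1 w Hw) as [e [He Hl]]. exists w, e. rewrite dist_self. auto.
    + right. destruct (H2 w Hw) as [e [He Hl]]. exists w, e. rewrite dist_self. auto.
  - intros w Hw [u [e [He [Hch [Hd Hl]]]]] [v [e' [He' [Hsv [Hch' [Hd' Hl']]]]]].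
    apply Hch'. apply (chain_snoc (y := w)); auto. apply (chain_snoc Hch); auto.
  - exists x. split; auto. destruct (H1 x Hx) as [e [He Hl]]. exists x, e.
    rewrite dist_self. repeat split; auto. constructor; auto.
  - exists y. split; auto. destruct (H2 y Hy) as [e [He Hl]]. exists y, e.
    rewrite dist_self. repeat split; auto.
Qed.

Lemma closed_sub_compact (X : MetricSpace) (K F : X -> Prop) :
  compact_set X K -> is_closed X F -> (forall z, F z -> K z) -> compact_set X F.
Proof.
  intros HK HF HFK G HGo HGc.
  destruct (HK (fun U => G U \/ U = (fun z => ~ F z))) as [l [Hl1 Hl2]].
  - intros U [HU|HU]; auto. subst; auto.
  - intros x Hx. destruct (classic (F x)) as [Hf|Hf].
    + destruct (HGc x Hf) as [U [HU1 HU2]]. exists U; auto.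
    + exists (fun z => ~ F z). auto.
  - exists (filter (fun U => if excluded_middle_informative (G U) then true else false) l).
    split.
    + intros U HU. apply filter_In in HU as [_ HU].
      destruct (excluded_middle_informative (G U)); [auto|discriminate].
    + intros x Hx. destruct (Hl2 x (HFK x Hx)) as [U [HU HUx]]. exists U.
      destruct (Hl1 U HU) as [HG| ->]; [|contradiction].
      split; auto. apply filter_In. split; auto.
      destruct (excluded_middle_informative (G U)); [auto|contradiction].
Qed.

Definition finitely_covered (X : MetricSpace) (G : (X -> Prop) -> Prop) (S : X -> Prop) :=
  exists l : list (X -> Prop), (forall U, In U l -> G U) /\
    (forall z, S z -> exists U, In U l /\ U z).

Lemma finitely_covered_union (X : MetricSpace) G (S : X -> Prop) (cs : list X) r :
  (forall y, S y -> exists c, In c cs /\ ball c r y) ->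
  (forall c, In c cs -> finitely_covered X G (fun z => S z /\ ball c r z)) ->
  finitely_covered X G S.
Proof.
  intros Hcov. revert S Hcov. induction cs as [|c cs IH]; intros S Hcov Hall.
  - exists nil. split; [intros U []|]. intros z Hz. destruct (Hcov z Hz) as [c [[] _]].
  - destruct (Hall c (or_introl eq_refl)) as [l1 [Hl1 Hc1]].
    destruct (IH (fun z => S z /\ ~ ball c r z)) as [l2 [Hl2 Hc2]].
    + intros y [Hy Hn]. destruct (Hcov y Hy) as [c' [[<-|Hin] Hb]]; [contradiction|eauto].
    + intros c' Hc'. destruct (Hall c' (or_intror Hc')) as [l [Hl Hcl]].
      exists l. split; auto. intros z [[Hz _] Hb]. apply Hcl. auto.
    + exists (l1 ++ l2). split.
      * intros U HU. apply in_app_or in HU as [HU|HU]; auto.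
      * intros z Hz. destruct (classic (ball c r z)) as [Hb|Hb].
        -- destruct (Hc1 z (conj Hz Hb)) as [U [HU HUz]]. exists U. split; auto. apply in_or_app; auto.
        -- destruct (Hc2 z (conj Hz Hb)) as [U [HU HUz]]. exists U. split; auto. apply in_or_app; auto.
Qed.

Lemma uncovered_shrinking_sets (X : MetricSpace) (D : nat) (G : (X -> Prop) -> Prop)
  (A : X -> Prop) (x : X) (rho : R) :
  doubling X D -> 0 < rho -> ~ finitely_covered X G A -> (forall z, A z -> dist x z < rho) ->
  exists Sq : nat -> X -> Prop,
    (forall n, ~ finitely_covered X G (Sq n) /\ (forall z, Sq n z -> A z) /\
       exists c, forall z, Sq n z -> dist c z < rho / 2 ^ n) /\
    (forall n z, Sq (S n) z -> Sq n z).
Proof.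
  intros Hdb Hrho HS Hx.
  apply (dependent_choice (fun n Sn => ~ finitely_covered X G Sn /\ (forall z, Sn z -> A z) /\
           exists c, forall z, Sn z -> dist c z < rho / 2 ^ n)
           (fun _ Sn Sn' => forall z, Sn' z -> Sn z)).
  - exists A. repeat split; auto. exists x. intros z Hz. rewrite pow_O, Rdiv_1_r. auto.
  - intros n Sn [HN [HSn [c Hc]]].
    assert (Hpos : 0 < rho / 2 ^ n) by (apply Rdiv_lt_0_compat; [lra|apply pow2_pos]).
    destruct (Hdb c _ Hpos) as [cs [_ Hcs]].
    assert (Hsplit : exists c', In c' cs /\
              ~ finitely_covered X G (fun z => Sn z /\ ball c' (rho / 2 ^ n / 2) z)).
    { apply NNPP. intro Hn. apply HN. apply finitely_covered_union with cs (rho / 2 ^ n / 2).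
      - intros y Hy. apply Hcs, Hc, Hy.
      - intros c' Hc'. apply NNPP. intro Hnc. apply Hn. eauto. }
    destruct Hsplit as [c' [_ Hc']].
    exists (fun z => Sn z /\ ball c' (rho / 2 ^ n / 2) z). repeat split; auto.
    + intros z [Hz _]. auto.
    + exists c'. intros z [_ Hz]. unfold ball in Hz. simpl.
      replace (rho / (2 * 2 ^ n)) with (rho / 2 ^ n / 2); auto.
      field. pose proof (pow2_pos n); lra.
    + intros z [Hz _]; auto.
Qed.

Lemma complete_shrinking_limit (X : MetricSpace) (Sq : nat -> X -> Prop) (rho : R) :
  complete X -> (forall n, exists z, Sq n z) -> (forall n z, Sq (S n) z -> Sq n z) ->
  (forall n, exists c, forall z, Sq n z -> dist c z < rho / 2 ^ n) ->
  exists x, forall e, 0 < e -> exists N, forall n w, (N <= n)%nat -> Sq n w -> dist x w < e.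
Proof.
  intros Hcomp Hne Hdec Hrad.
  assert (Hsub : forall n m, (n <= m)%nat -> forall z, Sq m z -> Sq n z).
  { intros n m Hnm. induction Hnm; auto. }
  assert (Hdiam : forall n z w, Sq n z -> Sq n w -> dist z w < 2 * rho / 2 ^ n).
  { intros n z w Hz Hw. destruct (Hrad n) as [c Hc].
    pose proof (Hc z Hz). pose proof (Hc w Hw). pose proof (dist_tri X z c w).
    rewrite (dist_sym X z c) in *. unfold Rdiv in *. lra. }
  destruct (choice (fun n z => Sq n z) Hne) as [zs Hzs].
  destruct (Hcomp zs) as [x Hx].
  { intros eps Heps. destruct (div_pow2_small (2 * rho) eps Heps) as [N HN].
    exists N. intros m n Hm Hn.
    apply Rlt_trans with (2 * rho / 2 ^ N); auto.
    apply Hdiam; [apply (Hsub N m Hm)|apply (Hsub N n Hn)]; apply Hzs. }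
  exists x. intros e He.
  destruct (div_pow2_small (2 * rho) (e / 2) ltac:(lra)) as [N1 HN1].
  destruct (Hx (e / 2) ltac:(lra)) as [N2 HN2].
  exists (Nat.max N1 N2). intros n w Hn Hw.
  pose proof (HN2 n ltac:(lia)).
  pose proof (Hdiam N1 _ _ (Hsub N1 n ltac:(lia) _ (Hzs n)) (Hsub N1 n ltac:(lia) _ Hw)).
  pose proof (dist_tri X x (zs n) w). rewrite (dist_sym X x (zs n)) in *. lra.
Qed.

Lemma cball_compact (X : MetricSpace) (D : nat) (c : X) (R0 : R) :
  complete X -> doubling X D -> compact_set X (cball c R0).
Proof.
  intros Hcomp Hdb G HGo HGc. apply NNPP. intro HN.
  assert (Hrho : 0 < Rabs R0 + 1) by (pose proof (Rabs_pos R0); lra).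
  destruct (uncovered_shrinking_sets X D G (cball c R0) c (Rabs R0 + 1) Hdb Hrho HN)
    as [Sq [HSq Hdec]].
  { intros z Hz. unfold cball in Hz. pose proof (Rle_abs R0). lra. }
  assert (Hne : forall n, exists z, Sq n z).
  { intros n. apply NNPP. intro Hn. apply (proj1 (HSq n)).
    exists nil. split; [intros U []|]. intros z Hz. exfalso. eauto. }
  destruct (complete_shrinking_limit X Sq _ Hcomp Hne Hdec (fun n => proj2 (proj2 (HSq n))))
    as [x Hx].
  assert (Hxin : cball c R0 x).
  { unfold cball. apply Rnot_lt_le. intro Hlt.
    destruct (Hx (dist c x - R0)) as [N HN']; [lra|].
    destruct (Hne N) as [w Hw]. pose proof (HN' N w (le_n N) Hw).
    pose proof (proj1 (proj2 (HSq N)) w Hw). unfold cball in *.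
    pose proof (dist_tri X c w x). rewrite (dist_sym X w x) in *. lra. }
  destruct (HGc x Hxin) as [U [HU HUx]].
  destruct (HGo U HU x HUx) as [e [He HUe]].
  destruct (Hx e He) as [N HN'].
  apply (proj1 (HSq N)). exists (U :: nil). split.
  - intros V [<-|[]]; auto.
  - intros w Hw. exists U. split; [left; auto|]. apply HUe. exact (HN' N w (le_n N) Hw).
Qed.

Lemma finite_intersection (X : MetricSpace) (K : X -> Prop) (F : nat -> X -> Prop) :
  compact_set X K -> (forall n, is_closed X (F n)) -> (forall n z, F (S n) z -> F n z) ->
  (forall z, K z -> ~ forall n, F n z) -> (forall n z, F n z -> K z) ->
  exists n, forall z, ~ F n z.
Proof.
  intros HK HF Hdec Hint HFK.
  assert (Hmono : forall n m, (n <= m)%nat -> forall z, F m z -> F n z).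
  { intros n m H. induction H; auto. }
  destruct (HK (fun U => exists n, U = fun z => ~ F n z)) as [l [Hl1 Hl2]].
  - intros U [n ->]. apply HF.
  - intros x Hx. apply NNPP. intro Hn. apply (Hint x Hx). intro n. apply NNPP. intro Hf.
    apply Hn. exists (fun z => ~ F n z). split; auto. exists n; auto.
  - assert (Hm : forall l : list (X -> Prop), (forall U, In U l -> exists n, U = fun z => ~ F n z) ->
       exists N, forall U, In U l -> forall z, F N z -> ~ U z).
    { clear -Hmono. intros l; induction l as [|U l IH]; intros Hl.
      - exists 0%nat. intros U [].
      - destruct IH as [N HN]. { intros; apply Hl; right; auto. }
        destruct (Hl U (or_introl eq_refl)) as [n Hn].
        exists (Nat.max n N). intros V [HV|HV] z Hz.
        + subst. intro H. apply H. apply Hmono with (Nat.max n N); auto. lia.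
        + apply (HN V HV). apply Hmono with (Nat.max n N); auto. lia. }
    destruct (Hm l Hl1) as [N HN]. exists N. intros z Hz.
    destruct (Hl2 z (HFK _ _ Hz)) as [U [HU1 HU2]]. exact (HN U HU1 z Hz HU2).
Qed.

Lemma compact_gap (X : MetricSpace) (A B : X -> Prop) : compact_set X A ->
  (forall a, A a -> exists r, 0 < r /\ forall b, B b -> r <= dist a b) ->
  exists d, 0 < d /\ forall a b, A a -> B b -> d <= dist a b.
Proof.
  intros HA Hr.
  destruct (HA (fun U => exists a r, 0 < r /\ (forall b, B b -> r <= dist a b) /\
                  U = ball a (r / 2))) as [l [Hl1 Hl2]].
  - intros U [a [r [_ [_ ->]]]]. apply ball_open.
  - intros x Hx. destruct (Hr x Hx) as [r [Hr0 Hrb]]. exists (ball x (r / 2)). split.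
    + exists x, r. auto.
    + unfold ball. rewrite dist_self. lra.
  - assert (Hm : forall l : list (X -> Prop), (forall U, In U l -> exists a r, 0 < r /\
        (forall b, B b -> r <= dist a b) /\ U = ball a (r / 2)) ->
       exists d, 0 < d /\ forall U, In U l -> forall z b, U z -> B b -> d <= dist z b).
    { clear. intros l; induction l as [|U l IH]; intros Hl.
      - exists 1. split; [lra|]. intros U [].
      - destruct IH as [d [Hd HN]]. { intros; apply Hl; right; auto. }
        destruct (Hl U (or_introl eq_refl)) as [a [r [Hr0 [Hrb ->]]]].
        exists (Rmin d (r / 2)). split; [apply Rmin_glb_lt; lra|].
        intros V [HV|HV] z b Hz Hb.
        + subst. unfold ball in Hz. pose proof (Hrb b Hb). pose proof (dist_tri X a z b).
          pose proof (Rmin_r d (r / 2)). lra.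
        + pose proof (HN V HV z b Hz Hb). pose proof (Rmin_l d (r / 2)). lra. }
    destruct (Hm l Hl1) as [d [Hd HN]]. exists d. split; auto.
    intros a b Ha Hb. destruct (Hl2 a Ha) as [U [HU1 HU2]]. eapply HN; eauto.
Qed.

Definition nbhd {X : MetricSpace} (A : X -> Prop) (r : R) : X -> Prop :=
  fun z => exists a, A a /\ dist a z < r.

Lemma nbhd_open (X : MetricSpace) (A : X -> Prop) r : is_open X (nbhd A r).
Proof.
  intros z [a [Ha Haz]]. exists (r - dist a z). split; [lra|].
  intros w Hw. exists a. split; auto. unfold ball in Hw. pose proof (dist_tri X a z w). lra.
Qed.

Lemma open_union (X : MetricSpace) (U V : X -> Prop) :
  is_open X U -> is_open X V -> is_open X (fun z => U z \/ V z).
Proof.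
  intros HU HV z [Hz|Hz].
  - destruct (HU z Hz) as [e [He Hb]]. exists e. split; auto.
  - destruct (HV z Hz) as [e [He Hb]]. exists e. split; auto.
Qed.

Lemma open_part_closed (X : MetricSpace) (Q U V : X -> Prop) :
  is_closed X Q -> is_open X V -> (forall z, Q z -> U z \/ V z) ->
  (forall z, Q z -> U z -> V z -> False) -> is_closed X (fun z => Q z /\ U z).
Proof.
  intros HQ HV Hcov Hdis z Hz. destruct (classic (Q z)) as [Hq|Hq].
  - assert (Hvz : V z) by (destruct (Hcov z Hq); auto; exfalso; apply Hz; split; auto).
    destruct (HV z Hvz) as [e [He Hb]]. exists e. split; auto.
    intros w Hw [HQw HUw]. exact (Hdis w HQw HUw (Hb w Hw)).
  - destruct (HQ z Hq) as [e [He Hb]]. exists e. split; auto.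
    intros w Hw [HQw _]. exact (Hb w Hw HQw).
Qed.

(** * Continua from fine chains *)

Definition chain_component (X : MetricSpace) (K : X -> Prop) (x : X) : X -> Prop :=
  fun z => K z /\ forall e, 0 < e -> chain (link e) K x z.

Lemma chain_component_closed (X : MetricSpace) (K : X -> Prop) (x : X) :
  is_closed X K -> is_closed X (chain_component X K x).
Proof.
  intros HKc z Hz. destruct (classic (K z)) as [Hk|Hk].
  - assert (exists e, 0 < e /\ ~ chain (link e) K x z) as [e [He Hne]].
    { apply NNPP. intro H. apply Hz. split; auto. intros e He. apply NNPP. intro H'.
      apply H. exists e; auto. }
    exists e. split; auto. intros w Hw [HKw HQw]. apply Hne.
    apply (chain_snoc (HQw e He)); auto. unfold link, ball in *. rewrite dist_sym; auto.
  - destruct (HKc z Hk) as [e [He Hb]]. exists e. split; auto. intros w Hw [Hkw _].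
    exact (Hb w Hw Hkw).
Qed.

Lemma fine_chains_in_open (X : MetricSpace) (K W : X -> Prop) (x : X) :
  compact_set X K -> is_closed X K -> is_open X W ->
  (forall z, chain_component X K x z -> W z) ->
  exists e, 0 < e /\ forall z, chain (link e) K x z -> W z.
Proof.
  intros HK HKc HW HQW.
  set (F := fun (n : nat) z => K z /\ chain (link (/ (INR n + 1))) K x z /\ ~ W z).
  assert (Hpos : forall n : nat, 0 < / (INR n + 1)) by apply RinvN_pos.
  destruct (finite_intersection X K F HK) as [N HN].
  - intros n z Hz. destruct (classic (K z)) as [Hk|Hk].
    2:{ destruct (HKc z Hk) as [e [He Hb]]. exists e. split; auto.
        intros w Hw [Hkw _]. exact (Hb w Hw Hkw). }
    destruct (classic (W z)) as [Hwz|Hwz].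
    { destruct (HW z Hwz) as [e [He Hb]]. exists e. split; auto.
      intros w Hw [_ [_ Hnw]]. exact (Hnw (Hb w Hw)). }
    exists (/ (INR n + 1)). split; auto. intros w Hw [Hkw [Hcw _]]. apply Hz.
    split; auto. split; auto. apply (chain_snoc Hcw); auto. unfold link, ball in *.
    rewrite dist_sym; auto.
  - intros n z [Hk [Hc Hw]]. split; auto. split; auto. revert Hc. apply chain_link_mono.
    rewrite S_INR. pose proof (pos_INR n). apply Rinv_le_contravar; lra.
  - intros z Hz Hall. destruct (Hall 0%nat) as [_ [_ Hnw]]. apply Hnw, HQW.
    split; auto. intros e He. destruct (inv_succ_small e He) as [n Hn].
    destruct (Hall n) as [_ [Hc _]]. revert Hc. apply chain_link_mono. lra.
  - intros n z [H _]; auto.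
  - exists (/ (INR N + 1)). split; auto. intros z Hz.
    apply NNPP. intro Hnw. apply (HN z). split; [exact (chain_last Hz)|auto].
Qed.

(** The two pieces lie at a positive distance, which fine chains from [x]
    cannot jump. *)
Lemma chain_component_unsplit (X : MetricSpace) (K : X -> Prop) (x : X) (U V : X -> Prop) :
  compact_set X K -> is_closed X K -> is_open X U -> is_open X V ->
  (forall z, chain_component X K x z -> U z \/ V z) ->
  (forall z, chain_component X K x z -> U z -> V z -> False) ->
  U x -> forall b, chain_component X K x b -> V b -> False.
Proof.
  intros HK HKc HU HV Hcov Hdis HUx b HQb HVb. set (Q := chain_component X K x) in *.
  assert (HKx : K x) by exact (chain_head (proj2 HQb 1 Rlt_0_1)).
  set (A := fun z => Q z /\ U z). set (B := fun z => Q z /\ V z).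
  assert (HAcomp : compact_set X A).
  { apply closed_sub_compact with K; [|apply open_part_closed with V|]; auto.
    - apply chain_component_closed; auto.
    - intros z [[Hz _] _]; auto. }
  destruct (compact_gap X A B HAcomp) as [d [Hd Hgap]].
  { intros a [HQa HUa]. destruct (HU a HUa) as [r [Hr Hb]]. exists r. split; auto.
    intros b' [HQb' HVb']. apply Rnot_lt_le. intro Hlt. exact (Hdis b' HQb' (Hb b' Hlt) HVb'). }
  assert (Hfar : forall z w, nbhd A (d / 3) z -> nbhd B (d / 3) w -> d / 3 < dist z w).
  { intros z w [a [Ha Haz]] [b' [Hb' Hbw]]. pose proof (Hgap a b' Ha Hb').
    pose proof (dist_tri X a z w). pose proof (dist_tri X a w b').
    rewrite (dist_sym X w b') in *. lra. }
  destruct (fine_chains_in_open X K (fun z => nbhd A (d / 3) z \/ nbhd B (d / 3) z) x HK HKc)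
    as [e [He Hreach]].
  { apply open_union; apply nbhd_open. }
  { intros z Hz. destruct (Hcov z Hz); [left|right]; exists z; (split; [split; auto|]);
      rewrite dist_self; lra. }
  assert (Hinv : nbhd A (d / 3) b /\ chain (link e) K x b).
  { apply (chain_invariant (L := link (Rmin e (d / 3))) (P := K)
      (fun z => nbhd A (d / 3) z /\ chain (link e) K x z) x b).
    - intros u v Hu Hv Huv [HAu Hcu].
      assert (Hcv : chain (link e) K x v).
      { apply (chain_snoc Hcu); auto. unfold link in *. pose proof (Rmin_l e (d / 3)). lra. }
      split; auto. destruct (Hreach v Hcv) as [HAv|HBv]; auto. exfalso.
      pose proof (Hfar u v HAu HBv). unfold link in Huv. pose proof (Rmin_r e (d / 3)). lra.
    - apply (proj2 HQb). apply Rmin_glb_lt; lra.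
    - assert (HQx : Q x) by (split; auto; intros e' _; constructor; auto).
      split; [exists x; split; [split; auto|rewrite dist_self; lra]|constructor; auto]. }
  assert (HBb : nbhd B (d / 3) b) by (exists b; split; [split; auto|rewrite dist_self; lra]).
  pose proof (Hfar b b (proj1 Hinv) HBb). rewrite dist_self in *. lra.
Qed.

Lemma chain_component_connected (X : MetricSpace) (K : X -> Prop) (x : X) :
  compact_set X K -> is_closed X K -> K x -> connected_set X (chain_component X K x).
Proof.
  intros HK HKc HKx [U [V [HU [HV [Hcov [Hdis [[a [HQa HUa]] [b [HQb HVb]]]]]]]]].
  assert (HQx : chain_component X K x x) by (split; auto; intros e _; constructor; auto).
  destruct (Hcov x HQx) as [Hx|Hx].
  - exact (chain_component_unsplit X K x U V HK HKc HU HV Hcov Hdis Hx b HQb HVb).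
  - refine (chain_component_unsplit X K x V U HK HKc HV HU _ _ Hx a HQa HUa).
    + intros z Hz; destruct (Hcov z Hz); auto.
    + intros z Hz H1 H2; exact (Hdis z Hz H2 H1).
Qed.

Lemma chain_continuum (X : MetricSpace) (K : X -> Prop) (x y : X) :
  compact_set X K -> is_closed X K ->
  (forall e, 0 < e -> chain (link e) K x y) ->
  exists Q, continuum X Q /\ Q x /\ Q y /\ forall z, Q z -> K z.
Proof.
  intros HK HKc Hch. exists (chain_component X K x).
  assert (HKx : K x) by exact (chain_head (Hch 1 Rlt_0_1)).
  split; [split|split; [|split]].
  - apply closed_sub_compact with K; auto; [apply chain_component_closed; auto|].
    intros z [Hz _]; auto.
  - apply chain_component_connected; auto.
  - split; auto. intros e _. constructor; auto.
  - split; [exact (chain_last (Hch 1 Rlt_0_1))|auto].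
  - intros z [Hz _]; auto.
Qed.

Lemma doubling_cover_refine (Z : MetricSpace) (D : nat) : doubling Z D ->
  forall r, 0 < r -> forall cs : list Z, exists cs', (length cs' <= D * length cs)%nat /\
    forall y, (exists c, In c cs /\ ball c r y) -> exists c', In c' cs' /\ ball c' (r/2) y.
Proof.
  intros Hdb r Hr cs. induction cs as [|c cs IH].
  - exists nil. split; simpl; [lia|]. intros y [c [[] _]].
  - destruct IH as [cs' [Hl Hc]]. destruct (Hdb c r Hr) as [l [Hl' Hc']].
    exists (l ++ cs'). split. rewrite length_app. simpl. lia.
    intros y [c0 [[<-|Hin] Hb]].
    + destruct (Hc' y Hb) as [c' [H1 H2]]. exists c'. split; auto. apply in_or_app; auto.
    + destruct (Hc y) as [c' [H1 H2]]. exists c0; auto. exists c'. split; auto. apply in_or_app; auto.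
Qed.

Lemma doubling_cover (Z : MetricSpace) (D : nat) : doubling Z D ->
  forall (p : Z) R, 0 < R -> forall m, exists cs : list Z, (length cs <= D ^ m)%nat /\
    forall y, dist p y < R -> exists c, In c cs /\ dist c y < R / 2 ^ m.
Proof.
  intros Hdb p R HR m. induction m as [|m [cs [Hl Hc]]].
  - exists (p :: nil). split; [simpl; lia|]. intros y Hy. exists p. split; [left; auto|lra].
  - assert (Hpos : 0 < R / 2 ^ m) by (apply Rdiv_lt_0_compat; auto; apply pow2_pos).
    destruct (doubling_cover_refine Z D Hdb _ Hpos cs) as [cs' [Hl' Hc']].
    exists cs'. split; [simpl; nia|].
    intros y Hy. destruct (Hc' y (Hc y Hy)) as [c' [H1 H2]]. exists c'. split; auto.
    unfold ball in H2. simpl. replace (R / (2 * 2 ^ m)) with (R / 2 ^ m / 2); auto.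
    field. pose proof (pow2_pos m); lra.
Qed.

Lemma cover_recenter (Z : MetricSpace) (p : Z) R r : forall cs : list Z,
  exists cs', (length cs' <= length cs)%nat /\ (forall c, In c cs' -> dist p c < R) /\
    forall y, dist p y < R -> (exists c, In c cs /\ dist c y < r) ->
      exists c', In c' cs' /\ dist c' y < 2 * r.
Proof.
  induction cs as [|c cs IH].
  - exists nil. split; [simpl; lia|]. split; [intros c []|]. intros y _ [c [[] _]].
  - destruct IH as [cs' [H1 [H2 H3]]].
    destruct (classic (exists w, dist p w < R /\ dist c w < r)) as [[w [Hw1 Hw2]]|Hn].
    + exists (w :: cs'). split; [simpl; lia|]. split.
      * intros c0 [<-|Hin]; auto.
      * intros y Hy [c0 [[<-|Hin] Hd]].
        -- exists w. split; [left; auto|]. pose proof (dist_tri Z w c y).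
           rewrite (dist_sym Z w c) in H. lra.
        -- destruct (H3 y Hy) as [c' [Hc1 Hc2]]. exists c0; auto. exists c'. split; [right|]; auto.
    + exists cs'. split; [simpl; lia|]. split; auto.
      intros y Hy [c0 [[<-|Hin] Hd]].
      * exfalso. apply Hn. exists y. auto.
      * apply H3; auto. exists c0; auto.
Qed.

Lemma doubling_net (Z : MetricSpace) (D : nat) : doubling Z D ->
  forall (p : Z) R, 0 < R -> forall m, exists cs : list Z, (length cs <= D ^ m)%nat /\
    (forall c, In c cs -> dist p c < R) /\
    forall y, dist p y < R -> exists c, In c cs /\ dist c y < 2 * (R / 2 ^ m).
Proof.
  intros Hdb p R HR m. destruct (doubling_cover Z D Hdb p R HR m) as [cs [Hl Hc]].
  destruct (cover_recenter Z p R (R / 2 ^ m) cs) as [cs' [H1 [H2 H3]]].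
  exists cs'. split; [lia|]. split; auto.
Qed.

Definition strictly_increasing (f : nat -> nat) := forall n, (f n < f (S n))%nat.

Lemma strictly_increasing_le f :
  strictly_increasing f -> forall n m, (n <= m)%nat -> (f n <= f m)%nat.
Proof. intros H n m Hnm. induction Hnm; auto. specialize (H m). lia. Qed.

Lemma strictly_increasing_ge f : strictly_increasing f -> forall n, (n <= f n)%nat.
Proof. intros H n. induction n; [lia|]. specialize (H n). lia. Qed.

Lemma strictly_increasing_comp f g :
  strictly_increasing f -> strictly_increasing g -> strictly_increasing (fun n => f (g n)).
Proof.
  intros Hf Hg n. pose proof (strictly_increasing_le f Hf (S (g n)) (g (S n)) (Hg n)).
  specialize (Hf (g n)). lia.
Qed.

Lemma strictly_increasing_large phi N B : strictly_increasing phi ->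
  exists k, (N <= k)%nat /\ B < INR (phi k).
Proof.
  intros Hphi. destruct (INR_unbounded B) as [j Hj]. exists (Nat.max N j). split; [lia|].
  apply Rlt_le_trans with (INR j); [lra|]. apply le_INR.
  pose proof (strictly_increasing_ge phi Hphi (Nat.max N j)). lia.
Qed.

Lemma Un_cv_subseq v l f : strictly_increasing f -> Un_cv v l -> Un_cv (fun n => v (f n)) l.
Proof.
  intros Hf Hv e He. destruct (Hv e He) as [N HN]. exists N. intros n Hn.
  apply HN. pose proof (strictly_increasing_ge f Hf n). lia.
Qed.

Lemma bounded_convergent_subseq (v : nat -> R) B : (forall n, Rabs (v n) <= B) ->
  exists f l, strictly_increasing f /\ Un_cv (fun n => v (f n)) l.
Proof.
  intros HB.
  destruct (Bolzano_Weierstrass v (fun c => -B <= c <= B) (compact_P3 (-B) B)) as [l Hl].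
  { intros n. apply Rabs_le_bounds. auto. }
  assert (Hstep : forall n N, exists p, (N <= p)%nat /\ Rabs (v p - l) < / (INR n + 1)).
  { intros n N. pose proof (RinvN_pos n) as Hp.
    destruct (Hl (Rtopology.disc l (mkposreal _ Hp)) N) as [p [Hp1 Hp2]].
    { exists (mkposreal _ Hp). intros x Hx; auto. }
    exists p. split; auto. }
  destruct (dependent_choice (fun n p => Rabs (v p - l) < / (INR n + 1))
              (fun _ p p' => (p < p')%nat)) as [f [H1 H2]].
  - destruct (Hstep 0%nat 0%nat) as [p [_ Hp]]. exists p; auto.
  - intros n p _. destruct (Hstep (S n) (S p)) as [p' [Hp1 Hp2]]. exists p'. split; auto.
  - exists f, l. split; auto. intros e He. destruct (inv_succ_small e He) as [N HN].
    exists N. intros n Hn. unfold Rdist. apply Rlt_le_trans with (/ (INR n + 1)); auto.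
    apply Rle_trans with (/ (INR N + 1)); [|lra].
    apply Rinv_le_contravar; [pose proof (pos_INR N); lra|]. apply le_INR in Hn. lra.
Qed.

Lemma diagonal_subseq (u : nat -> nat -> R) : (forall c, exists B, forall k, Rabs (u c k) <= B) ->
  exists phi, strictly_increasing phi /\ forall c, exists l, Un_cv (fun n => u c (phi n)) l.
Proof.
  intros HB.
  destruct (dependent_choice
      (fun n Psi => strictly_increasing Psi /\
         forall c, (c <= n)%nat -> exists l, Un_cv (fun t => u c (Psi t)) l)
      (fun _ Psi Psi' => exists s, strictly_increasing s /\ forall t, Psi' t = Psi (s t)))
    as [Ps [HI HR]].
  - destruct (HB 0%nat) as [B HB0].
    destruct (bounded_convergent_subseq (u 0%nat) B HB0) as [f [l [Hf Hl]]].
    exists f. split; auto. intros c Hc. replace c with 0%nat by lia. exists l; auto.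
  - intros n Psi [HPsi Hc]. destruct (HB (S n)) as [B HBn].
    destruct (bounded_convergent_subseq (fun t => u (S n) (Psi t)) B) as [s [l [Hs Hl]]].
    { intros; apply HBn. }
    exists (fun t => Psi (s t)). split; [split|exists s; auto].
    + apply strictly_increasing_comp; auto.
    + intros c Hcn. destruct (Nat.eq_dec c (S n)) as [->|Hne]; [exists l; auto|].
      destruct (Hc c ltac:(lia)) as [l' Hl']. exists l'.
      apply (Un_cv_subseq (fun t => u c (Psi t))); auto.
  - assert (Hrel : forall c m, (c <= m)%nat ->
             exists s, strictly_increasing s /\ forall t, Ps m t = Ps c (s t)).
    { intros c m Hm. induction Hm.
      - exists (fun t => t). split; [intros n; lia|auto].
      - destruct IHHm as [s [Hs Heq]]. destruct (HR m) as [s' [Hs' Heq']].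
        exists (fun t => s (s' t)). split; [apply strictly_increasing_comp; auto|].
        intros t. rewrite Heq', Heq. auto. }
    exists (fun n => Ps n n). split.
    + intros n. destruct (HR n) as [s [Hs Heq]]. rewrite Heq.
      apply Nat.lt_le_trans with (Ps n (S n)); [apply (HI n)|].
      apply strictly_increasing_le; [apply (HI n)|]. apply strictly_increasing_ge; auto.
    + intros c. destruct (proj2 (HI c) c (le_n c)) as [l Hl]. exists l.
      intros e He. destruct (Hl e He) as [N HN]. exists (Nat.max N c). intros n Hn.
      destruct (Hrel c n ltac:(lia)) as [s [Hs Heq]]. rewrite Heq. apply HN.
      pose proof (strictly_increasing_ge s Hs n). lia.
Qed.

Lemma list_eventually_all {I : Type} (l : list I) (Q : I -> nat -> Prop) :
  (forall a, In a l -> exists N, forall n, (N <= n)%nat -> Q a n) ->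
  exists N, forall n, (N <= n)%nat -> forall a, In a l -> Q a n.
Proof.
  induction l as [|a l IH]; intros H.
  - exists 0%nat. intros n _ a [].
  - destruct IH as [N HN]. { intros; apply H; right; auto. }
    destruct (H a (or_introl eq_refl)) as [N' HN'].
    exists (Nat.max N N'). intros n Hn b [<-|Hb]; [apply HN'|apply HN; auto]; lia.
Qed.

Lemma list_frequently_some {I : Type} (l : list I) (P : I -> nat -> Prop) :
  (forall N, exists n, (N <= n)%nat /\ exists a, In a l /\ P a n) ->
  exists a, In a l /\ forall N, exists n, (N <= n)%nat /\ P a n.
Proof.
  induction l as [|a l IH]; intros H.
  - destruct (H 0%nat) as [n [_ [a [[] _]]]].
  - destruct (classic (forall N, exists n, (N <= n)%nat /\ P a n)) as [Ha|Ha].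
    + exists a. split; [left|]; auto.
    + apply not_all_ex_not in Ha. destruct Ha as [N0 HN0].
      destruct IH as [b [Hb1 Hb2]].
      * intros N. destruct (H (Nat.max N N0)) as [n [Hn [b [[<-|Hb] Hp]]]].
        -- exfalso. apply HN0. exists n. split; auto. lia.
        -- exists n. split; [lia|]. exists b; auto.
      * exists b. split; [right|]; auto.
Qed.

(** Junk value [0] when [E] is empty or unbounded. *)
Definition Rsup (E : R -> Prop) : R :=
  match excluded_middle_informative (bound E /\ exists x, E x) with
  | left H => proj1_sig (completeness E (proj1 H) (proj2 H))
  | right _ => 0 end.

Lemma Rsup_ub E : bound E -> forall t, E t -> t <= Rsup E.
Proof.
  intros Hb t Ht. unfold Rsup. destruct (excluded_middle_informative _) as [H|H].
  - pose proof (proj2_sig (completeness E (proj1 H) (proj2 H))) as [Hm _]. apply Hm; auto.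
  - exfalso; apply H; split; eauto.
Qed.

Lemma Rsup_le E c : (exists x, E x) -> (forall t, E t -> t <= c) -> Rsup E <= c.
Proof.
  intros Hne Hc. unfold Rsup. destruct (excluded_middle_informative _) as [H|H].
  - pose proof (proj2_sig (completeness E (proj1 H) (proj2 H))) as [_ Hm]. apply Hm. intros t Ht; auto.
  - exfalso; apply H; split; auto. exists c. intros t Ht; auto.
Qed.

Definition pseudometric {I : Type} (d : I -> I -> R) :=
  (forall a, d a a = 0) /\ (forall a b, d a b = d b a) /\ (forall a b c, d a c <= d a b + d b c).

(** The completion of a pseudometric [d] on [I], realized as the uniform
    limits of the distance functions [d a] with the sup metric. *)
Section Completion.
Context {I : Type} (i0 : I) (d : I -> I -> R) (Hd : pseudometric d).

Definition approximable (g : I -> R) := forall e, 0 < e -> exists a, forall b, Rabs (g b - d a b) <= e.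

Definition completion_carrier := {g : I -> R | approximable g}.

Definition sup_dist (g h : completion_carrier) : R :=
  Rsup (fun t => exists b, t = Rabs (proj1_sig g b - proj1_sig h b)).

Lemma sup_dist_ge (g h : completion_carrier) b :
  Rabs (proj1_sig g b - proj1_sig h b) <= sup_dist g h.
Proof.
  apply Rsup_ub; [|exists b; auto].
  destruct g as [g Hg], h as [h Hh]. simpl.
  destruct (Hg 1 Rlt_0_1) as [a Ha]. destruct (Hh 1 Rlt_0_1) as [a' Ha'].
  exists (2 + d a a'). intros t [b' ->]. destruct Hd as [H0 [Hs Ht]].
  pose proof (Rabs_le_bounds _ _ (Ha b')). pose proof (Rabs_le_bounds _ _ (Ha' b')).
  pose proof (Ht a a' b'). pose proof (Ht a' a b'). pose proof (Hs a' a). apply Rabs_le. lra.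
Qed.

Lemma sup_dist_le (g h : completion_carrier) c :
  (forall b, Rabs (proj1_sig g b - proj1_sig h b) <= c) -> sup_dist g h <= c.
Proof.
  intros H. apply Rsup_le; [|intros t [b ->]; auto].
  exists (Rabs (proj1_sig g i0 - proj1_sig h i0)). exists i0; auto.
Qed.

Lemma sup_dist_nonneg g h : 0 <= sup_dist g h.
Proof. eapply Rle_trans; [apply Rabs_pos|apply (sup_dist_ge g h i0)]. Qed.

Lemma sup_dist_eq0 g h : sup_dist g h = 0 <-> g = h.
Proof.
  split.
  - intros H.
    assert (Hb : forall b, Rabs (proj1_sig g b - proj1_sig h b) <= 0)
      by (intros b; rewrite <- H; apply sup_dist_ge).
    destruct g as [g Hg], h as [h Hh]. simpl in Hb.
    assert (g = h) as <-.
    { apply functional_extensionality. intros b. pose proof (Rabs_le_bounds _ _ (Hb b)). lra. }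
    f_equal. apply proof_irrelevance.
  - intros ->. apply Rle_antisym; [|apply sup_dist_nonneg].
    apply sup_dist_le. intros b. rewrite Rminus_diag, Rabs_R0. lra.
Qed.

Lemma sup_dist_sym g h : sup_dist g h = sup_dist h g.
Proof.
  apply Rle_antisym; apply sup_dist_le; intros b; rewrite Rabs_minus_sym; apply sup_dist_ge.
Qed.

Lemma sup_dist_tri g h w : sup_dist g w <= sup_dist g h + sup_dist h w.
Proof.
  apply sup_dist_le. intros b. pose proof (sup_dist_ge g h b). pose proof (sup_dist_ge h w b).
  pose proof (Rabs_triang (proj1_sig g b - proj1_sig h b) (proj1_sig h b - proj1_sig w b)).
  replace (proj1_sig g b - proj1_sig h b + (proj1_sig h b - proj1_sig w b))
    with (proj1_sig g b - proj1_sig w b) in * by ring.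
  lra.
Qed.

Definition completion : MetricSpace :=
  {| carrier := completion_carrier; dist := sup_dist;
     dist_nonneg := sup_dist_nonneg; dist_eq0 := sup_dist_eq0;
     dist_sym := sup_dist_sym; dist_tri := sup_dist_tri |}.

Lemma dist_approximable (a : I) : approximable (d a).
Proof. intros e He. exists a. intros b. rewrite Rminus_diag, Rabs_R0. lra. Qed.

Definition embed (a : I) : completion := exist _ (d a) (dist_approximable a).

Lemma embed_dist (a a' : I) : dist (embed a) (embed a') = d a a'.
Proof.
  destruct Hd as [H0 [Hs Ht]]. apply Rle_antisym.
  - apply sup_dist_le. intros b. simpl.
    pose proof (Ht a a' b). pose proof (Ht a' a b). pose proof (Hs a' a). apply Rabs_le. lra.
  - pose proof (sup_dist_ge (embed a) (embed a') a') as H. simpl in H.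
    rewrite (H0 a'), Rminus_0_r in H. pose proof (Rle_abs (d a a')). simpl. lra.
Qed.

Lemma embed_dense (g : completion) e : 0 < e -> exists a, dist g (embed a) <= e.
Proof.
  intros He. destruct g as [g Hg]. destruct (Hg e He) as [a Ha]. exists a.
  apply sup_dist_le. auto.
Qed.

Lemma completion_complete : complete completion.
Proof.
  intros u Hu.
  assert (Hcb : forall b, Cauchy_crit (fun m => proj1_sig (u m) b)).
  { intros b e He. destruct (Hu e He) as [N HN]. exists N. intros m n Hm Hn. unfold Rdist.
    pose proof (sup_dist_ge (u m) (u n) b). pose proof (HN m n Hm Hn). simpl in *. lra. }
  destruct (choice (fun b l => Un_cv (fun m => proj1_sig (u m) b) l)
              (fun b => let (l, H) := R_complete _ (Hcb b) in ex_intro _ l H)) as [G HG].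
  assert (Hunif : forall e, 0 < e -> exists N, forall m, (N <= m)%nat ->
            forall b, Rabs (proj1_sig (u m) b - G b) <= e).
  { intros e He. destruct (Hu e He) as [N HN]. exists N. intros m Hm b.
    apply le_epsilon. intros e' He'. destruct (HG b e' He') as [N' HN'].
    set (n := Nat.max N N'). pose proof (HN m n Hm (Nat.le_max_l _ _)). simpl in *.
    pose proof (sup_dist_ge (u m) (u n) b). pose proof (HN' n (Nat.le_max_r _ _)). unfold Rdist in *.
    pose proof (Rabs_triang (proj1_sig (u m) b - proj1_sig (u n) b) (proj1_sig (u n) b - G b)).
    replace (proj1_sig (u m) b - proj1_sig (u n) b + (proj1_sig (u n) b - G b))
      with (proj1_sig (u m) b - G b) in * by ring.
    lra. }
  assert (HGp : approximable G).
  { intros e He. destruct (Hunif (e / 2)) as [N HN]; [lra|].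
    destruct (proj2_sig (u N) (e / 2)) as [a Ha]; [lra|]. exists a. intros b.
    pose proof (HN N (le_n N) b) as HuG. rewrite Rabs_minus_sym in HuG. pose proof (Ha b).
    pose proof (Rabs_triang (G b - proj1_sig (u N) b) (proj1_sig (u N) b - d a b)).
    replace (G b - proj1_sig (u N) b + (proj1_sig (u N) b - d a b)) with (G b - d a b) in * by ring.
    lra. }
  exists (exist _ G HGp). intros e He. destruct (Hunif (e / 2)) as [N HN]; [lra|].
  exists N. intros n Hn. simpl. apply Rle_lt_trans with (e / 2); [|lra].
  apply sup_dist_le; auto.
Qed.

End Completion.

(** * Gromov compactness *)

Definition pGH_marked (Zs : nat -> MetricSpace) (ps xs ys : forall k, Zs k)
    (Y : MetricSpace) (q x y : Y) : Prop :=
  forall R0 eps, 0 < R0 -> 0 < eps -> exists N, forall k, (N <= k)%nat ->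
    exists f : Zs k -> Y, f (ps k) = q /\
      (forall a b, cball (ps k) R0 a -> cball (ps k) R0 b ->
         Rabs (dist (f a) (f b) - dist a b) < eps) /\
      (forall y0, cball q (R0 - eps) y0 -> exists a, cball (ps k) R0 a /\ dist (f a) y0 < eps) /\
      dist (f (xs k)) x < eps /\ dist (f (ys k)) y < eps.

Lemma pGH_marked_converges Zs ps xs ys Y q x y :
  pGH_marked Zs ps xs ys Y q x y -> pGH_converges Zs ps Y q.
Proof.
  intros H R0 eps HR He. destruct (H R0 eps HR He) as [N HN]. exists N. intros k Hk.
  destruct (HN k Hk) as [f [H1 [H2 [H3 _]]]]. exists f. auto.
Qed.

Lemma choice_map_with_base {Z Y I : Type} (j : I -> Y) (p : Z) (a0 : I)
  (near : I -> Z -> Prop) (P : Z -> Prop) :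
  near a0 p -> (forall z, P z -> exists a, near a z) ->
  exists f : Z -> Y, f p = j a0 /\ forall z, P z -> exists a, near a z /\ f z = j a.
Proof.
  intros Hp Hnear.
  exists (fun z => match excluded_middle_informative (z = p) with
           | left _ => j a0
           | right _ => match excluded_middle_informative (exists a, near a z) with
                        | left H => j (proj1_sig (constructive_indefinite_description _ H))
                        | right _ => j a0 end end).
  split.
  - destruct (excluded_middle_informative (p = p)); [auto|contradiction].
  - intros z Hz. destruct (excluded_middle_informative (z = p)) as [->|_]; [eauto|].
    destruct (excluded_middle_informative _) as [H|H]; [|exfalso; auto].
    destruct (constructive_indefinite_description _ H) as [a Ha]. eauto.
Qed.

Section GromovLimit.
Variables (Zs : nat -> MetricSpace) (ps : forall k, Zs k) (I : Type) (T : forall k, I -> Zs k) (a0 : I).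
Hypothesis T_base : forall k, T k a0 = ps k.
Hypothesis T_net : forall R0 eps, 0 < eps -> exists l : list I,
  forall k z, dist (ps k) z <= R0 -> exists a, In a l /\ dist (T k a) z < eps.
Variables (phi : nat -> nat) (delta : I -> I -> R).
Hypothesis delta_lim : forall a b, Un_cv (fun n => dist (T (phi n) a) (T (phi n) b)) (delta a b).

Lemma limit_pseudometric : pseudometric delta.
Proof.
  split; [|split].
  - intros a. apply (UL_sequence (fun n => dist (T (phi n) a) (T (phi n) a))); auto.
    intros e He. exists 0%nat. intros n _. unfold Rdist. rewrite dist_self, Rminus_0_r, Rabs_R0. auto.
  - intros a b. apply (UL_sequence (fun n => dist (T (phi n) a) (T (phi n) b))); auto.
    intros e He. destruct (delta_lim b a e He) as [N HN]. exists N. intros n Hn.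
    rewrite dist_sym. auto.
  - intros a b c.
    apply (Rle_cv_lim (Un := fun n => dist (T (phi n) a) (T (phi n) c))
             (Vn := fun n => dist (T (phi n) a) (T (phi n) b) + dist (T (phi n) b) (T (phi n) c))).
    + intros n. apply dist_tri.
    + auto.
    + apply CV_plus; auto.
Qed.

Lemma limit_index_near (l : list I) (Rn eta : R) (a : I) : 0 < eta -> delta a0 a < Rn ->
  (forall k z, dist (ps k) z <= Rn -> exists b, In b l /\ dist (T k b) z < eta) ->
  exists b, In b l /\ delta b a <= eta.
Proof.
  intros Heta Ha Hnet.
  destruct (list_frequently_some l (fun b n => dist (T (phi n) b) (T (phi n) a) < eta)) as [b [Hb Hfreq]].
  { intros N. destruct (delta_lim a0 a (Rn - delta a0 a)) as [Na HNa]; [lra|].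
    exists (Nat.max N Na). split; [lia|].
    pose proof (HNa (Nat.max N Na) ltac:(lia)) as Hd. unfold Rdist in Hd.
    rewrite T_base in Hd. apply Rabs_def2 in Hd.
    destruct (Hnet (phi (Nat.max N Na)) (T (phi (Nat.max N Na)) a)) as [b [Hb1 Hb2]]; [lra|eauto]. }
  exists b. split; auto. apply Rnot_lt_le. intro Hlt.
  destruct (delta_lim b a (delta b a - eta)) as [N HN]; [lra|].
  destruct (Hfreq N) as [n [Hn Hd]]. pose proof (HN n Hn) as H. unfold Rdist in H.
  apply Rabs_def2 in H. lra.
Qed.

Local Notation Ylim := (completion a0 delta limit_pseudometric).
Local Notation io := (embed a0 delta limit_pseudometric).

(** [f] sends each point of the ball to the limit of a nearby sample point. *)
Theorem limit_approximation (tr : list I) R0 R1 eps : R0 <= R1 -> 0 < eps ->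
  exists N, forall k, (N <= k)%nat ->
  exists f : Zs (phi k) -> Ylim, f (ps (phi k)) = io a0 /\
    (forall z w, cball (ps (phi k)) R1 z -> cball (ps (phi k)) R1 w ->
       Rabs (dist (f z) (f w) - dist z w) < eps) /\
    (forall y0, cball (io a0) (R0 - eps) y0 -> exists z, cball (ps (phi k)) R0 z /\ dist (f z) y0 < eps) /\
    (forall a, In a tr -> cball (ps (phi k)) R1 (T (phi k) a) -> dist (f (T (phi k) a)) (io a) < eps).
Proof.
  intros HR He. set (eta := eps / 10). assert (Heta : 0 < eta) by (unfold eta; lra).
  pose proof limit_pseudometric as [_ [Hsym Htri]].
  assert (Hio : forall a b, dist (io a) (io b) = delta a b) by apply embed_dist.
  destruct (T_net R1 eta Heta) as [l Hl].
  set (l' := a0 :: tr ++ l).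
  destruct (list_eventually_all l' (fun a n => forall b, In b l' ->
     Rabs (dist (T (phi n) a) (T (phi n) b) - delta a b) < eta)) as [N HN].
  { intros a Ha. apply list_eventually_all. intros b Hb. apply delta_lim; auto. }
  exists N. intros k Hk. set (pk := ps (phi k)).
  assert (Hclose : forall a b, In a l' -> In b l' ->
            Rabs (dist (T (phi k) a) (T (phi k) b) - delta a b) < eta) by (intros; apply HN; auto).
  destruct (choice_map_with_base io pk a0 (fun a z => In a l' /\ dist (T (phi k) a) z < eta) (cball pk R1))
    as [f [Hf0 Hf]].
  { split; [left; auto|]. unfold pk. rewrite T_base, dist_self. auto. }
  { intros z Hz. destruct (Hl (phi k) z Hz) as [a [Ha1 Ha2]]. exists a. split; auto.
    right. apply in_or_app. auto. }
  exists f. split; [|split; [|split]]; auto.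
  - intros z w Hz Hw.
    destruct (Hf z Hz) as [az [[Haz1 Haz2] ->]]. destruct (Hf w Hw) as [aw [[Haw1 Haw2] ->]].
    rewrite Hio. pose proof (Rabs_def2 _ _ (Hclose az aw Haz1 Haw1)).
    pose proof (Rabs_le_bounds _ _ (dist_diff _ (T (phi k) az) (T (phi k) aw) z w)).
    apply Rabs_def1; unfold eta in *; lra.
  - intros y0 Hy0. unfold cball in Hy0.
    destruct (embed_dense a0 delta limit_pseudometric y0 eta Heta) as [a Ha].
    assert (Hda : delta a0 a <= R0 - eps + eta).
    { rewrite <- Hio. pose proof (dist_tri _ (io a0) y0 (io a)). lra. }
    destruct (limit_index_near l R1 eta a Heta) as [b [Hb Hba]]; [unfold eta in *; lra|auto|].
    assert (Hb' : In b l') by (right; apply in_or_app; auto).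
    pose proof (Rabs_def2 _ _ (Hclose a0 b (or_introl eq_refl) Hb')) as Hpb. rewrite T_base in Hpb.
    pose proof (Htri a0 a b). pose proof (Hsym a b).
    assert (Hzb : cball pk R0 (T (phi k) b)) by (unfold cball, pk, eta in *; lra).
    exists (T (phi k) b). split; auto.
    destruct (Hf (T (phi k) b)) as [az [[Haz1 Haz2] ->]]; [unfold cball in *; lra|].
    pose proof (Rabs_def2 _ _ (Hclose az b Haz1 Hb')).
    pose proof (dist_tri _ (io az) (io a) y0). pose proof (dist_sym _ y0 (io a)).
    pose proof (Htri az b a). rewrite Hio in *. unfold eta in *. lra.
  - intros a Ha Hza. destruct (Hf _ Hza) as [az [[Haz1 Haz2] ->]]. rewrite Hio.
    assert (Ha' : In a l') by (right; apply in_or_app; auto).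
    pose proof (Rabs_def2 _ _ (Hclose az a Haz1 Ha')). unfold eta in *. lra.
Qed.

End GromovLimit.

Lemma nat3_pairs_enum : exists e : nat -> ((nat * nat) * nat) * ((nat * nat) * nat),
  forall a b, exists c, e c = (a, b).
Proof.
  set (dec := fun x : nat => (Cantor.of_nat (fst (Cantor.of_nat x)), snd (Cantor.of_nat x))).
  exists (fun c => (dec (fst (Cantor.of_nat c)), dec (snd (Cantor.of_nat c)))).
  intros [[i j] k] [[i' j'] k'].
  exists (Cantor.to_nat (Cantor.to_nat (Cantor.to_nat (i, j), k),
                         Cantor.to_nat (Cantor.to_nat (i', j'), k'))).
  unfold dec. repeat (rewrite Cantor.cancel_of_to; cbn [fst snd]). reflexivity.
Qed.

Lemma subsequence_distances_converge {I : Type} (Zs : nat -> MetricSpace) (ps : forall k, Zs k)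
  (T : forall k, I -> Zs k) :
  (exists e : nat -> I * I, forall a b, exists c, e c = (a, b)) ->
  (forall a, exists C, forall k, dist (ps k) (T k a) <= C) ->
  exists phi delta, strictly_increasing phi /\
    forall a b, Un_cv (fun n => dist (T (phi n) a) (T (phi n) b)) (delta a b).
Proof.
  intros [e He] Tbound.
  destruct (diagonal_subseq (fun c k => dist (T k (fst (e c))) (T k (snd (e c))))) as [phi [Hphi Hlim]].
  { intros c. destruct (Tbound (fst (e c))) as [C1 HC1]. destruct (Tbound (snd (e c))) as [C2 HC2].
    exists (C1 + C2). intros k. rewrite Rabs_pos_eq by apply dist_nonneg.
    pose proof (dist_tri _ (T k (fst (e c))) (ps k) (T k (snd (e c)))).
    pose proof (dist_sym _ (T k (fst (e c))) (ps k)). pose proof (HC1 k). pose proof (HC2 k). lra. }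
  destruct (choice (fun ab l => Un_cv (fun n => dist (T (phi n) (fst ab)) (T (phi n) (snd ab))) l))
    as [lim Hlim'].
  { intros [a b]. destruct (He a b) as [c Hc]. destruct (Hlim c) as [l Hl]. exists l.
    rewrite Hc in Hl. exact Hl. }
  exists phi, (fun a b => lim (a, b)). split; auto. intros a b. exact (Hlim' (a, b)).
Qed.

(** The sample points are indexed by [((j, m), i)]: the [i]-th point of a
    [2^(1-m)(j+1)]-net of the ball of radius [j + 1], after the base point and
    the two marked points. *)
Lemma doubling_samples (Zs : nat -> MetricSpace) (ps xs ys : forall k, Zs k) (D : nat) (B : R) :
  (forall k, doubling (Zs k) D) ->
  (forall k, dist (ps k) (xs k) <= B) -> (forall k, dist (ps k) (ys k) <= B) ->
  exists T : forall k, (nat * nat) * nat -> Zs k,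
    (forall k, T k ((0, 0), 0)%nat = ps k) /\ (forall k, T k ((0, 0), 1)%nat = xs k) /\
    (forall k, T k ((0, 0), 2)%nat = ys k) /\
    (forall a, exists C, forall k, dist (ps k) (T k a) <= C) /\
    (forall R0 eps, 0 < eps -> exists l, forall k z, dist (ps k) z <= R0 ->
       exists a, In a l /\ dist (T k a) z < eps).
Proof.
  intros Hdb Hx Hy.
  assert (Hrad : forall j, 0 < INR j + 1) by (intros j; pose proof (pos_INR j); lra).
  set (NL := fun k j m => proj1_sig (constructive_indefinite_description _
                 (doubling_net (Zs k) D (Hdb k) (ps k) _ (Hrad j) m))).
  assert (HNL : forall k j m, (length (NL k j m) <= D ^ m)%nat /\
      (forall c, In c (NL k j m) -> dist (ps k) c < INR j + 1) /\
      forall y, dist (ps k) y < INR j + 1 ->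
        exists c, In c (NL k j m) /\ dist c y < 2 * ((INR j + 1) / 2 ^ m)).
  { intros k j m. unfold NL. destruct (constructive_indefinite_description _ _). auto. }
  exists (fun k a => nth (snd a) (ps k :: xs k :: ys k :: NL k (fst (fst a)) (snd (fst a))) (ps k)).
  split; [|split; [|split; [|split]]]; auto.
  - intros [[j m] i]. exists (INR j + 1 + Rabs B). intros k. cbn [fst snd].
    pose proof (Rle_abs B). pose proof (Rabs_pos B). pose proof (pos_INR j).
    destruct (nth_in_or_default i (ps k :: xs k :: ys k :: NL k j m) (ps k)) as [Hin| ->].
    + destruct Hin as [<-|[<-|[<-|Hin]]]; [rewrite dist_self|pose proof (Hx k)|pose proof (Hy k)|
        pose proof (proj1 (proj2 (HNL k j m)) _ Hin)]; lra.
    + rewrite dist_self. lra.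
  - intros R0 eps Heps. destruct (INR_unbounded R0) as [j Hj].
    destruct (div_pow2_small (2 * (INR j + 1)) eps Heps) as [m Hm].
    exists (map (fun i => ((j, m), i)) (seq 0 (3 + D ^ m))).
    intros k z Hz. destruct (HNL k j m) as [Hlen [_ Hcov]].
    destruct (Hcov z ltac:(lra)) as [c [Hc1 Hc2]].
    destruct (In_nth _ _ (ps k) Hc1) as [n [Hn1 Hn2]].
    exists ((j, m), (3 + n)%nat). split.
    + apply in_map. apply in_seq. lia.
    + simpl. rewrite Hn2. unfold Rdiv in *. lra.
Qed.

Theorem gromov_compactness (Zs : nat -> MetricSpace) (ps xs ys : forall k, Zs k) (D : nat) (B : R) :
  (forall k, doubling (Zs k) D) ->
  (forall k, dist (ps k) (xs k) <= B) -> (forall k, dist (ps k) (ys k) <= B) ->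
  exists phi, strictly_increasing phi /\ exists Y : MetricSpace, complete Y /\ exists q x y : Y,
    pGH_marked (fun k => Zs (phi k)) (fun k => ps (phi k)) (fun k => xs (phi k)) (fun k => ys (phi k))
      Y q x y.
Proof.
  intros Hdb Hx Hy.
  destruct (doubling_samples Zs ps xs ys D B Hdb Hx Hy) as [T [HT0 [HT1 [HT2 [Tbound Tnet]]]]].
  destruct (subsequence_distances_converge Zs ps T nat3_pairs_enum Tbound)
    as [phi [delta [Hphi Hlim]]].
  exists phi. split; auto.
  exists (completion ((0, 0), 0)%nat delta (limit_pseudometric _ _ T phi delta Hlim)).
  split; [apply completion_complete|].
  exists (embed _ _ _ ((0, 0), 0)%nat), (embed _ _ _ ((0, 0), 1)%nat), (embed _ _ _ ((0, 0), 2)%nat).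
  intros R0 eps HR0 Heps.
  destruct (limit_approximation Zs ps _ T _ HT0 Tnet phi delta Hlim
              (((0, 0), 1) :: ((0, 0), 2) :: nil)%nat R0 (Rmax R0 B) eps (Rmax_l _ _) Heps)
    as [N HN].
  exists N. intros k Hk. destruct (HN k Hk) as [f [Hf0 [Hfd [Hfs Hft]]]].
  pose proof (Rmax_l R0 B). pose proof (Rmax_r R0 B).
  exists f. split; [|split; [|split; [|split]]]; auto.
  - intros a b Ha Hb. apply Hfd; unfold cball in *; lra.
  - rewrite <- HT1. apply Hft; [simpl; auto|]. unfold cball. rewrite HT1. pose proof (Hx (phi k)). lra.
  - rewrite <- HT2. apply Hft; [simpl; auto|]. unfold cball. rewrite HT2. pose proof (Hy (phi k)). lra.
Qed.

(** * Lifting chains from the limit *)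

Lemma chain_shadow (Z Y : MetricSpace) (f : Z -> Y) (K : Z -> Prop) eps
  (LY : Y -> Y -> Prop) (PY : Y -> Prop) :
  (forall z, PY z -> exists w, K w /\ dist (f w) z < eps) -> (forall z, PY z -> LY z z) ->
  forall z0 z1, chain LY PY z0 z1 -> forall w0 w1, K w0 -> K w1 ->
    dist (f w0) z0 < eps -> dist (f w1) z1 < eps ->
    chain (fun w w' => exists z z', PY z /\ PY z' /\ LY z z' /\ dist (f w) z < eps /\ dist (f w') z' < eps)
          (fun w => K w /\ exists z, PY z /\ dist (f w) z < eps) w0 w1.
Proof.
  intros Hsurj HLr. induction 1 as [x Hx|x z y Hx Hl Hc IH]; intros w0 w1 Hw0 Hw1 Hd0 Hd1.
  - apply chain_cons with w1; [split; eauto|exists x, x; auto|constructor; split; eauto].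
  - destruct (Hsurj z (chain_head Hc)) as [w [Hw1' Hw2']].
    apply chain_cons with w; [split; eauto|exists x, z; repeat split; auto|].
    + exact (chain_head Hc).
    + apply IH; auto.
Qed.

Lemma chain_lift (Zs : nat -> MetricSpace) (ps xs ys : forall k, Zs k) (Y : MetricSpace) (q x y : Y)
  (B Rc : R) (LY : Y -> Y -> Prop) (PY : Y -> Prop) :
  pGH_marked Zs ps xs ys Y q x y ->
  (forall k, dist (ps k) (xs k) <= B) -> (forall k, dist (ps k) (ys k) <= B) ->
  (forall z, PY z -> dist q z <= Rc) -> (forall z, PY z -> LY z z) ->
  chain LY PY x y -> forall eps, 0 < eps -> exists N, forall k, (N <= k)%nat ->
    chain (fun w w' => exists z z', PY z /\ PY z' /\ LY z z' /\
              dist w w' < dist z z' + 3 * eps /\ Rabs (dist (ps k) w - dist q z) < 2 * eps)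
          (fun w => exists z, PY z /\ Rabs (dist (ps k) w - dist q z) < 2 * eps) (xs k) (ys k).
Proof.
  intros Hm Hx Hy HPc HLr Hch eps Heps.
  set (R0 := Rabs Rc + Rabs B + eps + 1).
  assert (HR0 : 0 < R0) by (unfold R0; pose proof (Rabs_pos Rc); pose proof (Rabs_pos B); lra).
  destruct (Hm R0 eps HR0 Heps) as [N HN]. exists N. intros k Hk.
  destruct (HN k Hk) as [f [Hf0 [Hfd [Hfs [Hfx Hfy]]]]].
  assert (HB : forall w, dist (ps k) w <= B -> cball (ps k) R0 w).
  { intros w Hw. unfold cball, R0. pose proof (Rle_abs B). pose proof (Rabs_pos Rc). lra. }
  assert (Hbase : forall w z, cball (ps k) R0 w -> dist (f w) z < eps ->
            Rabs (dist (ps k) w - dist q z) < 2 * eps).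
  { intros w z Hw Hwz.
    assert (Hp : cball (ps k) R0 (ps k)) by (unfold cball; rewrite dist_self; lra).
    pose proof (Rabs_def2 _ _ (Hfd _ _ Hp Hw)) as Hd. rewrite Hf0 in Hd.
    pose proof (dist_tri Y q (f w) z). pose proof (dist_tri Y q z (f w)).
    pose proof (dist_sym Y z (f w)). apply Rabs_def1; lra. }
  pose proof (chain_shadow _ Y f (cball (ps k) R0) eps LY PY) as Hsh.
  refine (chain_mono _ _ _ _ _ _ (Hsh _ HLr x y Hch (xs k) (ys k) (HB _ (Hx k)) (HB _ (Hy k)) Hfx Hfy)).
  - intros u v [Hu _] [Hv _] [z [z' [Hz [Hz' [Hl [Huz Hvz]]]]]].
    exists z, z'. split; [|split; [|split; [|split; [|apply Hbase; auto]]]]; auto.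
    pose proof (Rabs_def2 _ _ (Hfd u v Hu Hv)). pose proof (dist_tri Y (f u) z (f v)).
    pose proof (dist_tri Y z z' (f v)). pose proof (dist_sym Y (f v) z'). lra.
  - intros u [Hu [z [Hz Huz]]]. exists z. split; auto.
  - intros z Hz. destruct (Hfs z) as [w [Hw Hwz]]; [|eauto].
    unfold cball, R0. pose proof (HPc z Hz). pose proof (Rle_abs Rc). pose proof (Rabs_pos B).
    lra.
Qed.

Lemma pGH_marked_base_dist (Zs : nat -> MetricSpace) (ps xs ys : forall k, Zs k) (Y : MetricSpace)
  (q x y : Y) (a B : R) :
  pGH_marked Zs ps xs ys Y q x y ->
  (forall k, a <= dist (ps k) (xs k) <= B) -> (forall k, a <= dist (ps k) (ys k) <= B) ->
  a <= dist q x /\ a <= dist q y.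
Proof.
  intros Hm Hx Hy.
  assert (HB : 0 <= B) by (pose proof (Hx 0%nat); pose proof (dist_nonneg _ (ps 0%nat) (xs 0%nat)); lra).
  split; apply le_epsilon; intros e He;
    destruct (Hm (B + 1) (e / 2) ltac:(lra) ltac:(lra)) as [N HN];
    destruct (HN N (le_n N)) as [f [Hf0 [Hfd [_ [Hfx Hfy]]]]];
    assert (Hp : cball (ps N) (B + 1) (ps N)) by (unfold cball; rewrite dist_self; lra).
  - assert (Hxb : cball (ps N) (B + 1) (xs N)) by (unfold cball; pose proof (Hx N); lra).
    pose proof (Rabs_def2 _ _ (Hfd _ _ Hp Hxb)). rewrite Hf0 in *.
    pose proof (Hx N). pose proof (dist_tri Y q x (f (xs N))). pose proof (dist_sym Y x (f (xs N))). lra.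
  - assert (Hyb : cball (ps N) (B + 1) (ys N)) by (unfold cball; pose proof (Hy N); lra).
    pose proof (Rabs_def2 _ _ (Hfd _ _ Hp Hyb)). rewrite Hf0 in *.
    pose proof (Hy N). pose proof (dist_tri Y q y (f (ys N))). pose proof (dist_sym Y y (f (ys N))). lra.
Qed.

(** * Uniform constants by compactness *)

Lemma exists_uniform_bound {A : Type} (H : A -> Prop) (G : R -> A -> Prop) :
  (forall u : nat -> A, (forall n, H (u n) /\ ~ G (INR n + 1) (u n)) -> False) ->
  exists M, 1 <= M /\ forall a, H a -> G M a.
Proof.
  intros Hu. apply NNPP. intro Hn.
  assert (Hbad : forall n : nat, exists a, H a /\ ~ G (INR n + 1) a).
  { intros n. apply NNPP. intro Hna. apply Hn. exists (INR n + 1).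
    split; [pose proof (pos_INR n); lra|]. intros a Ha. apply NNPP. eauto. }
  destruct (choice _ Hbad) as [u Hu']. exact (Hu u Hu').
Qed.

Record config := { cfg_X : MetricSpace; cfg_p : cfg_X; cfg_x : cfg_X; cfg_y : cfg_X; cfg_r : R }.

Definition cfg_rescaled (c : config) : MetricSpace := rescale (cfg_r c) (cfg_X c).

Definition cfg_bounded (c : config) : Prop :=
  0 < cfg_r c /\ dist (cfg_p c) (cfg_x c) <= 2 * cfg_r c /\ dist (cfg_p c) (cfg_y c) <= 2 * cfg_r c.

Section UniformConstants.
Variables (D : nat) (C : MetricSpace -> Prop).
Hypothesis HC : forall X, C X -> complete X /\ doubling X D.
Hypothesis Hlim : forall (r : nat -> R) (Xs : nat -> MetricSpace) (ps : forall k, Xs k),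
  (forall k, 0 < r k) -> (forall k, C (Xs k)) ->
  forall (Y : MetricSpace) (q : Y), complete Y ->
    pGH_converges (fun k => rescale (r k) (Xs k)) ps Y q ->
    connected_space Y /\ no_cut_points Y.

Lemma rescaled_limit (u : nat -> config) :
  (forall n, C (cfg_X (u n)) /\ cfg_bounded (u n)) ->
  exists phi, strictly_increasing phi /\ exists (Y : MetricSpace) (q x y : Y),
    connected_space Y /\ no_cut_points Y /\
    pGH_marked (fun k => cfg_rescaled (u (phi k))) (fun k => cfg_p (u (phi k)))
      (fun k => cfg_x (u (phi k))) (fun k => cfg_y (u (phi k))) Y q x y.
Proof.
  intros Hu.
  destruct (gromov_compactness (fun n => cfg_rescaled (u n)) (fun n => cfg_p (u n))
              (fun n => cfg_x (u n)) (fun n => cfg_y (u n)) D 2) as [phi [Hphi [Y [HY [q [x [y Hm]]]]]]].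
  - intros n. apply doubling_rescale; [apply Hu|apply HC, Hu].
  - intros n. destruct (Hu n) as [_ [Hr [Hx _]]]. apply rescale_le; auto.
  - intros n. destruct (Hu n) as [_ [Hr [_ Hy]]]. apply rescale_le; auto.
  - exists phi. split; auto. exists Y, q, x, y.
    destruct (Hlim (fun k => cfg_r (u (phi k))) (fun k => cfg_X (u (phi k))) (fun k => cfg_p (u (phi k)))
                 (fun k => proj1 (proj2 (Hu (phi k)))) (fun k => proj1 (Hu (phi k))) Y q HY)
      as [Hconn Hncp]; [exact (pGH_marked_converges _ _ _ _ _ _ _ _ Hm)|].
    auto.
Qed.

Lemma uniform_local_chains : exists M, 1 <= M /\
  forall X, C X -> forall (x y : X) s, 0 < s -> dist x y <= s ->
    chain (link (s / 2)) (fun z => dist x z < M * s) x y.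
Proof.
  destruct (exists_uniform_bound
    (fun c => C (cfg_X c) /\ cfg_p c = cfg_x c /\ 0 < cfg_r c /\ dist (cfg_x c) (cfg_y c) <= cfg_r c)
    (fun M c => chain (link (cfg_r c / 2)) (fun z => dist (cfg_x c) z < M * cfg_r c) (cfg_x c) (cfg_y c)))
    as [M [HM1 HM]].
  2:{ exists M. split; auto. intros X HX x y s Hs Hd.
      exact (HM (Build_config X x x y s) (conj HX (conj eq_refl (conj Hs Hd)))). }
  intros u Hu.
  destruct (rescaled_limit u) as [phi [Hphi [Y [q [x [y [Hconn [_ Hm]]]]]]]].
  { intros n. destruct (Hu n) as [[HX [Hp [Hr Hd]]] _]. repeat split; auto; rewrite Hp;
      [rewrite dist_self|]; lra. }
  assert (Hbd : forall k, @dist (cfg_rescaled (u (phi k))) (cfg_p (u (phi k))) (cfg_x (u (phi k))) <= 1 /\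
                          @dist (cfg_rescaled (u (phi k))) (cfg_p (u (phi k))) (cfg_y (u (phi k))) <= 1).
  { intros k. destruct (Hu (phi k)) as [[_ [Hp [Hr Hd]]] _]. rewrite Hp, dist_self.
    split; [lra|apply rescale_le; auto; lra]. }
  assert (Hch : chain (link (1 / 4)) (fun _ => True) x y).
  { apply connected_chain; auto; intros w _; exists (1 / 4); split; try lra; intros v Hv _;
      unfold link; [|rewrite dist_sym]; auto. }
  destruct (chain_range (fun z => dist q z) x y Hch) as [lo [hi [_ Hch2]]].
  destruct (chain_lift _ _ _ _ Y q x y 1 hi (link (1 / 4)) (fun z => True /\ lo <= dist q z <= hi)
              Hm (fun k => proj1 (Hbd k)) (fun k => proj2 (Hbd k))) with (eps := 1 / 16) as [N HN];
    [intros z [_ Hz]; lra|intros z _; unfold link; rewrite dist_self; lra|exact Hch2|lra|].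
  destruct (strictly_increasing_large phi N (hi + 1) Hphi) as [k [HNk Hk]].
  destruct (Hu (phi k)) as [[_ [Hp [Hr _]]] Hno]. apply Hno.
  refine (chain_mono _ _ _ _ _ _ (HN k HNk)).
  - intros w w' _ _ [z [z' [_ [_ [Hl [Hww _]]]]]]. unfold link, cfg_rescaled in *.
    replace (cfg_r (u (phi k)) / 2) with (1 / 2 * cfg_r (u (phi k))) by field.
    apply (rescale_lt (cfg_X (u (phi k)))); auto. lra.
  - intros w [z [[_ Hz] Hwz]]. unfold cfg_rescaled in *. rewrite <- Hp. apply Rabs_def2 in Hwz.
    apply (rescale_lt (cfg_X (u (phi k)))); auto. lra.
Qed.

Lemma chain_avoiding_point (Y : MetricSpace) (q x y : Y) (c : R) : 1 <= c ->
  connected_set Y (fun z => z <> q) -> x <> q -> y <> q ->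
  exists lo hi, 0 < lo <= hi /\
    chain (fun z z' => dist z z' < dist q z / c) (fun z => z <> q /\ lo <= dist q z <= hi) x y.
Proof.
  intros Hc Hconn Hx Hy.
  assert (Hch : chain (fun z z' => dist z z' < dist q z / c) (fun z => z <> q) x y).
  { apply connected_chain; auto.
    - intros w Hw. exists (dist q w / c). split; [apply Rdiv_lt_0_compat; [apply dist_pos; auto|lra]|].
      intros v Hv _. auto.
    - intros v Hv. exists (dist q v / (2 * c)).
      split; [apply Rdiv_lt_0_compat; [apply dist_pos; auto|lra]|].
      intros w Hw _. pose proof (dist_tri Y q w v). pose proof (dist_sym Y v w).
      pose proof (dist_pos Y q v (not_eq_sym Hv)).
      assert (Hw' : dist v w * (2 * c) < dist q v).
      { apply Rmult_lt_compat_r with (r := 2 * c) in Hw; [|lra].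
        unfold Rdiv in Hw. rewrite Rmult_assoc, Rinv_l, Rmult_1_r in Hw by lra. exact Hw. }
      apply Rmult_lt_reg_r with c; [lra|]. unfold Rdiv. rewrite Rmult_assoc, Rinv_l, Rmult_1_r by lra.
      nra. }
  destruct (chain_range (fun z => dist q z) x y Hch) as [lo [hi [[z0 [Hz0 Hlo]] Hch2]]].
  exists lo, hi. split; auto. split.
  - rewrite <- Hlo. apply dist_pos. auto.
  - destruct (chain_head Hch2) as [_ H]. lra.
Qed.

Lemma relative_link_lift (c lo eps dz dw dzz dww : R) : 1 <= c -> 0 < eps -> 16 * c * eps = lo ->
  lo <= dz -> Rabs (dw - dz) < 2 * eps -> dww < dzz + 3 * eps -> dzz < dz / (2 * c) -> dww < dw / c.
Proof.
  intros Hc He Hlo Hdz Hdw Hww Hzz. apply Rabs_def2 in Hdw.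
  assert (Hzz' : dzz * (2 * c) < dz).
  { apply Rmult_lt_compat_r with (r := 2 * c) in Hzz; [|lra].
    unfold Rdiv in Hzz. rewrite Rmult_assoc, Rinv_l, Rmult_1_r in Hzz by lra. exact Hzz. }
  apply Rmult_lt_reg_r with c; [lra|]. unfold Rdiv. rewrite Rmult_assoc, Rinv_l, Rmult_1_r by lra.
  nra.
Qed.

Lemma uniform_annular_chains (c : R) : 1 <= c -> exists Lam, 1 <= Lam /\
  forall X, C X -> forall (p x y : X) r, 0 < r ->
    annulus X p r (2 * r) x -> annulus X p r (2 * r) y ->
    chain (fun w w' => dist w w' < dist p w / c) (annulus X p (r / Lam) (Lam * r)) x y.
Proof.
  intros Hc.
  destruct (exists_uniform_bound
    (fun a => C (cfg_X a) /\ 0 < cfg_r a /\ annulus _ (cfg_p a) (cfg_r a) (2 * cfg_r a) (cfg_x a) /\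
              annulus _ (cfg_p a) (cfg_r a) (2 * cfg_r a) (cfg_y a))
    (fun L a => chain (fun w w' => dist w w' < dist (cfg_p a) w / c)
                  (annulus _ (cfg_p a) (cfg_r a / L) (L * cfg_r a)) (cfg_x a) (cfg_y a)))
    as [Lam [HL1 HL]].
  2:{ exists Lam. split; auto. intros X HX p x y r Hr Hx Hy.
      exact (HL (Build_config X p x y r) (conj HX (conj Hr (conj Hx Hy)))). }
  intros u Hu.
  assert (Hbd : forall n,
    1 <= @dist (cfg_rescaled (u n)) (cfg_p (u n)) (cfg_x (u n)) <= 2 /\
    1 <= @dist (cfg_rescaled (u n)) (cfg_p (u n)) (cfg_y (u n)) <= 2).
  { intros n. destruct (Hu n) as [[_ [Hr [Hx Hy]]] _]. split; apply rescaled_annulus_bounds; auto. }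
  destruct (rescaled_limit u) as [phi [Hphi [Y [q [x [y [_ [Hncp Hm]]]]]]]].
  { intros n. destruct (Hu n) as [[HX [Hr [Hx Hy]]] _]. unfold cfg_bounded, annulus in *.
    rewrite !(dist_sym _ (cfg_p (u n))). repeat split; auto; lra. }
  destruct (pGH_marked_base_dist _ _ _ _ Y q x y 1 2 Hm (fun k => proj1 (Hbd (phi k)))
              (fun k => proj2 (Hbd (phi k)))) as [Hqx Hqy].
  destruct (chain_avoiding_point Y q x y (2 * c)) as [lo [hi [[Hlo Hlohi] Hch]]];
    [lra|exact (NNPP _ (Hncp q))|intros ->; rewrite dist_self in Hqx; lra
    |intros ->; rewrite dist_self in Hqy; lra|].
  set (eps := lo / (16 * c)).
  assert (Heps : 0 < eps) by (apply Rdiv_lt_0_compat; lra).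
  assert (Heps' : 16 * c * eps = lo) by (unfold eps; field; lra).
  destruct (chain_lift _ _ _ _ Y q x y 2 hi (fun z z' => dist z z' < dist q z / (2 * c))
              (fun z => z <> q /\ lo <= dist q z <= hi) Hm (fun k => proj2 (proj1 (Hbd (phi k))))
              (fun k => proj2 (proj2 (Hbd (phi k)))) ltac:(intros z [_ Hz]; lra)
              ltac:(intros z [Hz _]; rewrite dist_self;
                    apply Rdiv_lt_0_compat; [apply dist_pos; auto|lra])
              Hch eps Heps) as [N HN].
  destruct (strictly_increasing_large phi N (2 / lo + 2 * hi) Hphi) as [k [HNk Hk]].
  destruct (Hu (phi k)) as [[_ [Hr _]] Hno]. apply Hno.
  refine (chain_mono _ _ _ _ _ _ (HN k HNk)); unfold cfg_rescaled in *.
  - intros w w' _ _ [z [z' [[_ Hz] [_ [Hl [Hww Hwz]]]]]].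
    apply (rescale_relative_link (cfg_X (u (phi k))) (cfg_r (u (phi k)))); auto.
    exact (relative_link_lift c lo eps _ _ _ _ Hc Heps Heps' (proj1 Hz) Hwz Hww Hl).
  - intros w [z [[_ Hz] Hwz]]. apply Rabs_def2 in Hwz.
    apply (annulus_of_rescaled_bounds (cfg_X (u (phi k))) _ _ w lo hi); auto; [nra|lra].
Qed.

End UniformConstants.

Section FineChains.
Variables (X : MetricSpace) (M : R).
Hypothesis HM1 : 1 <= M.
Hypothesis local_chains : forall (x y : X) s, 0 < s -> dist x y <= s ->
  chain (link (s / 2)) (fun z => dist x z < M * s) x y.

Lemma local_chains_iter m : forall (x y : X) s, 0 < s -> dist x y <= s ->
  chain (link (s / 2 ^ S m)) (fun z => dist x z < 2 * M * s) x y.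
Proof.
  induction m as [|m IHm]; intros x y s Hs Hd.
  - replace (s / 2 ^ 1) with (s / 2) by (simpl; field).
    generalize (local_chains x y s Hs Hd). apply chain_mono; auto. intros u Hu. nra.
  - apply (chain_refine (L := link (s / 2)) (P := fun z => dist x z < M * s)); auto.
    + intros u v Hu Hv Huv. unfold link in Huv.
      replace (s / 2 ^ S (S m)) with (s / 2 / 2 ^ S m) by (simpl; field; pose proof (pow2_pos m); lra).
      generalize (IHm u v (s / 2) ltac:(lra) ltac:(lra)). apply chain_mono; auto.
      intros z Hz. pose proof (dist_tri X x u z). nra.
    + intros u Hu. nra.
Qed.

Lemma local_fine_chains (x y : X) s : 0 < s -> dist x y <= s -> forall e, 0 < e ->
  chain (link e) (fun z => dist x z < 2 * M * s) x y.
Proof.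
  intros Hs Hd e He. destruct (div_pow2_small s e He) as [m Hm].
  apply chain_link_mono with (s / 2 ^ S m); [|apply local_chains_iter; auto].
  apply Rle_trans with (s / 2 ^ m); [|lra]. simpl. unfold Rdiv.
  apply Rmult_le_compat_l; [lra|]. apply Rinv_le_contravar; pose proof (pow2_pos m); lra.
Qed.

(** Refining each link [w w'], of length below [d(p, w) / (4M)], stays
    within distance [d(p, w) / 2] of [w]. *)
Lemma annular_fine_chains (p x y : X) (a b : R) : 0 < a ->
  chain (fun w w' => dist w w' < dist p w / (4 * M)) (annulus X p a b) x y ->
  forall e, 0 < e -> chain (link e) (annulus X p (a / 2) (2 * b)) x y.
Proof.
  intros Ha Hch e He. revert Hch. apply chain_refine.
  - intros u v [Hu1 Hu2] _ Huv.
    assert (Hs : 0 < dist p u / (4 * M)).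
    { rewrite dist_sym. apply Rdiv_lt_0_compat; lra. }
    generalize (local_fine_chains u v _ Hs ltac:(lra) e He). apply chain_mono; auto.
    intros z Hz. replace (2 * M * (dist p u / (4 * M))) with (dist u p / 2) in Hz
      by (rewrite dist_sym; field; lra).
    pose proof (dist_tri X u z p). pose proof (dist_tri X u p z). pose proof (dist_sym X p z).
    pose proof (dist_tri X z u p). pose proof (dist_sym X z u). unfold annulus. split; lra.
  - intros u [Hu1 Hu2]. unfold annulus. split; lra.
Qed.

End FineChains.

Theorem lemmaA3 (D : nat) (C : MetricSpace -> Prop)
  (HC : forall X, C X -> complete X /\ doubling X D)
  (Hlim : forall (r : nat -> R) (Xs : nat -> MetricSpace) (ps : forall k, Xs k),
      (forall k, 0 < r k) -> (forall k, C (Xs k)) ->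
      forall (Y : MetricSpace) (q : Y), complete Y ->
        pGH_converges (fun k => rescale (r k) (Xs k)) ps Y q ->
        connected_space Y /\ no_cut_points Y) :
  exists lam : R, 1 <= lam /\ forall X, C X -> ALC X lam.
Proof.
  destruct (uniform_local_chains D C HC Hlim) as [M [HM1 HM]].
  destruct (uniform_annular_chains D C HC Hlim (4 * M)) as [Lam [HL1 HL]]; [lra|].
  exists (2 * Lam). split; [lra|].
  intros X HX p r Hr _ x y Hx Hy.
  set (K := annulus X p (r / Lam / 2) (2 * (Lam * r))).
  destruct (chain_continuum X K x y) as [Q [HQ [HQx [HQy HQK]]]].
  - apply closed_sub_compact with (cball p (2 * (Lam * r))); [|apply annulus_closed|].
    + destruct (HC X HX). eapply cball_compact; eauto.
    + intros z [_ Hz]. unfold cball. rewrite dist_sym. auto.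
  - apply annulus_closed.
  - apply (annular_fine_chains X M HM1 (HM X HX)); [|apply HL; auto].
    apply Rdiv_lt_0_compat; lra.
  - exists Q. split; [exact HQ|split; [exact HQx|split; [exact HQy|]]].
    intros z Hz. destruct (HQK z Hz) as [Hz1 Hz2]. split.
    + replace (r / (2 * Lam)) with (r / Lam / 2) by (field; lra). auto.
    + nra.
Qed.
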